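(* Let $q\in C^\infty(\mathbb{R})$ be strictly positive, let $p(t)=\frac1{q(t)}\left(\frac54\left(\frac{q'(t)}{q(t)}\right)^2-\frac{q''(t)}{q(t)}\right)$, and suppose there are real numbers $0<\eta_1<\eta_2$ with $$\eta_1\le q(t)\le\eta_2,\qquad \left|\frac{q'(t)}{q(t)}\right|\le\eta_2,\qquad |p(t)|\le\eta_2\qquad\text{for all }0\le t\le1.$$ Let $\lambda>0$ and $\epsilon$ be real numbers with $0<\epsilon<\lambda\exp(\eta_2^{3/4}/4)$, and let $$k=20\left(\frac{\eta_2}{\eta_1}\right)^2+8\eta_2^2+10\frac{\eta_2}{\eta_1}+1.$$ Suppose $p_b:\mathbb{R}\to\mathbb{R}$ is infinitely differentiable with $$\sup_{0\le t\le1}|p(t)-p_b(t)|\le\frac12\frac{\eta_1}{\lambda}e^{-k}\exp\!\left(-\frac{\eta_2^{3/4}}{4}\right)\epsilon .$$ Then there exists a function $q_b:[0,1]\to\mathbb{R}$ such that $$\frac1{q_b(t)}\left(\frac54\left(\frac{q_b'(t)}{q_b(t)}\right)^2-\frac{q_b''(t)}{q_b(t)}\right)=p_b(t)\quad\text{for }0\le t\le1,$$ and every phase function for $y''(t)+\lambda^2q_b(t)y(t)=0$ on $[0,1]$ is an $\epsilon$-approximate phase function for $y''(t)+\lambda^2q(t)y(t)=0$ on $[0,1]$.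
   Context: A sufficiently smooth $\alpha:[0,1]\to\mathbb{R}$ is a phase function for $y''+\lambda^2 Q y=0$ on $[0,1]$ if $\cos(\alpha)/|\alpha'|^{1/2}$ and $\sin(\alpha)/|\alpha'|^{1/2}$ form a basis of its solution space on $[0,1]$. $\alpha$ is an $\epsilon$-approximate phase function for $y''+\lambda^2qy=0$ on $[0,1]$ if, with $u=\sin(\alpha)/|\alpha'|^{1/2}$ and $v=\cos(\alpha)/|\alpha'|^{1/2}$, there is a basis $\{\tilde u,\tilde v\}$ of solutions of $y''+\lambda^2qy=0$ with $|u(t)-\tilde u(t)|\le\epsilon\sup_{[0,1]}|\tilde u|$ and $|v(t)-\tilde v(t)|\le\epsilon\sup_{[0,1]}|\tilde v|$ for all $0\le t\le1$. *)

From Stdlib Require Import Reals Lra.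
Open Scope R_scope.

Definition is_derivs (f : R -> R) (D : nat -> R -> R) : Prop :=
  D 0%nat = f /\ forall (n : nat) (x : R), derivable_pt_lim (D n) x (D (S n) x).

Definition smooth (f : R -> R) : Prop := exists D, is_derivs f D.

Definition in01 (t : R) : Prop := 0 <= t <= 1.

(* f' is the derivative of f on [0,1] (one-sided at the endpoints),
   i.e. the derivative of the restriction of f to [0,1]. *)
Definition has_deriv_on01 (f f' : R -> R) : Prop :=
  forall x, in01 x ->
    limit1_in (fun y => (f y - f x) / (y - x)) (fun y => in01 y /\ y <> x) (f' x) x.

Definition is_solution01 (lam : R) (Q y : R -> R) : Prop :=
  exists y1 y2 : R -> R,
    has_deriv_on01 y y1 /\ has_deriv_on01 y1 y2 /\
    forall t, in01 t -> y2 t + lam ^ 2 * Q t * y t = 0.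

Definition is_basis01 (lam : R) (Q u v : R -> R) : Prop :=
  is_solution01 lam Q u /\ is_solution01 lam Q v /\
  (forall a b : R, (forall t, in01 t -> a * u t + b * v t = 0) -> a = 0 /\ b = 0) /\
  (forall y, is_solution01 lam Q y ->
     exists a b : R, forall t, in01 t -> y t = a * u t + b * v t).

Definition phase_u (alpha alpha' : R -> R) (t : R) : R :=
  sin (alpha t) / sqrt (Rabs (alpha' t)).
Definition phase_v (alpha alpha' : R -> R) (t : R) : R :=
  cos (alpha t) / sqrt (Rabs (alpha' t)).

Definition is_phase_function (lam : R) (Q alpha alpha' : R -> R) : Prop :=
  has_deriv_on01 alpha alpha' /\
  (forall t, in01 t -> alpha' t <> 0) /\
  is_basis01 lam Q (phase_u alpha alpha') (phase_v alpha alpha').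

Definition is_sup_abs01 (f : R -> R) (M : R) : Prop :=
  is_lub (fun r => exists t, in01 t /\ r = Rabs (f t)) M.

Definition is_approx_phase_function (eps lam : R) (q alpha alpha' : R -> R) : Prop :=
  exists tu tv : R -> R,
    is_basis01 lam q tu tv /\
    (exists Mu Mv : R,
       is_sup_abs01 tu Mu /\ is_sup_abs01 tv Mv /\
       forall t, in01 t ->
         Rabs (phase_u alpha alpha' t - tu t) <= eps * Mu /\
         Rabs (phase_v alpha alpha' t - tv t) <= eps * Mv).

Definition p_of (q q1 q2 : R -> R) (t : R) : R :=
  / q t * (5 / 4 * (q1 t / q t) ^ 2 - q2 t / q t).

(* Substituting q = w^(-4) turns p_of q into 4 w^3 w''. So w = q^(-1/4) solves
   w'' = p / (4 w^3), and a solution W of W'' = pb / (4 W^3) with the same initial data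
   yields qb = W^(-4) with p_of qb = pb. Such a W is obtained by Picard iteration for the
   equation with W replaced by max(W, m) in the denominator, whose right-hand side is Lipschitz;
   a Gronwall estimate for (W' - w')^2 + (W - w)^2 shows that W stays within O(sup |p - pb|)
   of w, so the truncation is never active and qb is uniformly close to q.
   For a phase function of qb, the solutions of the q-equation with the same initial data
   as its two basis functions again form a basis, and the energy e'^2 + lam^2 qb e^2 of the
   difference e obeys a Gronwall inequality driven by lam^4 sup |q - qb|^2; the choice of
   the constants makes this at most eps^2 times the squared sup norms. *)

From Stdlib Require Import Reals Lra Lia Psatz.
From Coquelicot Require Import Coquelicot.
Open Scope R_scope.

Lemma limit1_in_iff f D l x0 :
  limit1_in f D l x0 <->
  forall eps, 0 < eps -> exists alp, 0 < alp /\
    forall x, D x -> Rabs (x - x0) < alp -> Rabs (f x - l) < eps.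
Proof.
  unfold limit1_in, limit_in; simpl; unfold R_dist; split.
  - intros H eps He; destruct (H eps He) as [a [Ha H']]; exists a; split; auto.
  - intros H eps He; destruct (H eps He) as [a [Ha H']]; exists a; split; auto.
    intros x [Hx1 Hx2]; auto.
Qed.

Lemma continuity_pt_iff f x : continuity_pt f x <->
  forall eps, 0 < eps -> exists alp, 0 < alp /\
    forall y, Rabs (y - x) < alp -> Rabs (f y - f x) < eps.
Proof.
  unfold continuity_pt, continue_in. rewrite limit1_in_iff. split.
  - intros H eps He; destruct (H eps He) as [a [Ha H']]; exists a; split; auto.
    intros y Hy. destruct (Req_dec y x) as [->|Hn].
    + unfold Rminus; rewrite Rplus_opp_r, Rabs_R0; auto.
    + apply H'; auto. unfold D_x, no_cond; auto.
  - intros H eps He; destruct (H eps He) as [a [Ha H']]; exists a; split; auto.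
Qed.

Lemma derivable_pt_lim_eq f x l l' : l = l' -> derivable_pt_lim f x l -> derivable_pt_lim f x l'.
Proof. intros ->; auto. Qed.

Lemma derivable_pt_lim_continuity_pt f x l : derivable_pt_lim f x l -> continuity_pt f x.
Proof. intros H. apply derivable_continuous_pt. exists l. exact H. Qed.

Lemma exp_le x y : x <= y -> exp x <= exp y.
Proof. intros [H | ->]; [left; apply exp_increasing; auto | right; auto]. Qed.

(** * Calculus on [0,1] *)

Lemma has_deriv_on01_of_derivable f f' :
  (forall x, in01 x -> derivable_pt_lim f x (f' x)) -> has_deriv_on01 f f'.
Proof.
  intros H x Hx. apply limit1_in_iff. intros eps He. destruct (H x Hx eps He) as [d Hd].
  exists d. split; [apply cond_pos|]. intros y [_ Hy] Hyd.
  specialize (Hd (y - x)). replace (x + (y - x)) with y in Hd by ring.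
  apply Hd; auto. lra.
Qed.

Lemma has_deriv_on01_interior f f' x :
  has_deriv_on01 f f' -> 0 < x < 1 -> derivable_pt_lim f x (f' x).
Proof.
  intros H Hx eps He.
  destruct (proj1 (limit1_in_iff _ _ _ _) (H x ltac:(unfold in01; lra)) eps He) as [a [Ha Ha']].
  assert (Hd : 0 < Rmin a (Rmin x (1 - x))) by (apply Rmin_pos; [lra|apply Rmin_pos; lra]).
  exists (mkposreal _ Hd). simpl. intros h Hh Hhd.
  pose proof (Rmin_l a (Rmin x (1 - x))). pose proof (Rmin_r a (Rmin x (1 - x))).
  pose proof (Rmin_l x (1 - x)). pose proof (Rmin_r x (1 - x)).
  specialize (Ha' (x + h)). replace (x + h - x) with h in Ha' by ring.
  apply Ha'; [split; [unfold in01; apply Rabs_def2 in Hhd; lra | lra] | lra].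
Qed.

Lemma has_deriv_on01_limit f f' x :
  has_deriv_on01 f f' -> in01 x -> limit1_in f in01 (f x) x.
Proof.
  intros H Hx. apply limit1_in_iff. intros eps He.
  destruct (proj1 (limit1_in_iff _ _ _ _) (H x Hx) 1 ltac:(lra)) as [a [Ha Ha']].
  set (c := Rabs (f' x) + 2).
  assert (Hc : 0 < c) by (unfold c; pose proof (Rabs_pos (f' x)); lra).
  exists (Rmin a (eps / c)). split; [apply Rmin_pos; auto; apply Rdiv_lt_0_compat; lra|].
  intros y Hy Hyx. pose proof (Rmin_l a (eps / c)). pose proof (Rmin_r a (eps / c)).
  destruct (Req_dec y x) as [-> | Hn].
  { unfold Rminus; rewrite Rplus_opp_r, Rabs_R0; lra. }
  specialize (Ha' y (conj Hy Hn) ltac:(lra)).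
  assert (Hq : Rabs ((f y - f x) / (y - x)) <= c).
  { pose proof (Rabs_triang_inv ((f y - f x) / (y - x)) (f' x)). unfold c. lra. }
  replace (f y - f x) with ((f y - f x) / (y - x) * (y - x)) by (field; lra).
  rewrite Rabs_mult. apply Rle_lt_trans with (c * Rabs (y - x)).
  - apply Rmult_le_compat_r; [apply Rabs_pos | auto].
  - replace eps with (c * (eps / c)) by (field; lra). apply Rmult_lt_compat_l; lra.
Qed.

Lemma has_deriv_on01_ext f f' g g' :
  (forall x, in01 x -> f x = g x) -> (forall x, in01 x -> f' x = g' x) ->
  has_deriv_on01 f f' -> has_deriv_on01 g g'.
Proof.
  intros Ef Ef' H x Hx. rewrite <- Ef'; auto.
  apply limit1_ext with (fun y => (f y - f x) / (y - x)); auto.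
  intros y [Hy _]. rewrite !Ef; auto.
Qed.

Lemma has_deriv_on01_lin a f f' b g g' : has_deriv_on01 f f' -> has_deriv_on01 g g' ->
  has_deriv_on01 (fun t => a * f t + b * g t) (fun t => a * f' t + b * g' t).
Proof.
  intros Hf Hg x Hx.
  apply limit1_ext with (fun y => a * ((f y - f x) / (y - x)) + b * ((g y - g x) / (y - x))).
  { intros y [_ Hy]. field. lra. }
  apply limit_plus; apply limit_mul; try apply (limit_free (fun _ => _)); auto.
Qed.

Lemma has_deriv_on01_mult f f' g g' : has_deriv_on01 f f' -> has_deriv_on01 g g' ->
  has_deriv_on01 (fun t => f t * g t) (fun t => f' t * g t + f t * g' t).
Proof.
  intros Hf Hg x Hx; cbv beta.
  apply limit1_ext with (fun y => (f y - f x) / (y - x) * g y + f x * ((g y - g x) / (y - x))).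
  { intros y [_ Hy]. field. lra. }
  apply limit_plus; apply limit_mul.
  - apply (Hf x Hx).
  - apply limit1_imp with in01; [tauto|]. apply (has_deriv_on01_limit g g'); auto.
  - apply (limit_free (fun _ => f x) _ x).
  - exact (Hg x Hx).
Qed.

Lemma has_deriv_on01_nonpos_le F F' :
  has_deriv_on01 F F' -> (forall x, in01 x -> F' x <= 0) -> forall t, in01 t -> F t <= F 0.
Proof.
  intros HF Hn.
  assert (Hc : forall x, in01 x -> limit1_in F in01 (F x) x)
    by (intros; apply (has_deriv_on01_limit F F'); auto).
  assert (Hmvt : forall s t, 0 < s -> s < t -> t < 1 -> F t <= F s).
  { intros s t H1 H2 H3. destruct (MVT_cor2 F F' s t H2) as [c [Hc1 Hc2]].
    - intros c Hc'. apply has_deriv_on01_interior; auto. lra.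
    - assert (F' c <= 0) by (apply Hn; unfold in01; lra). nra. }
  assert (Hint : forall t, 0 < t < 1 -> F t <= F 0).
  { intros t Ht. destruct (Rle_or_lt (F t) (F 0)) as [|Hlt]; auto. exfalso.
    destruct (proj1 (limit1_in_iff _ _ _ _) (Hc 0 ltac:(unfold in01; lra)) (F t - F 0) ltac:(lra))
      as [a [Ha H]].
    set (s := Rmin (a / 2) (t / 2)).
    assert (Hs1 := Rmin_l (a / 2) (t / 2)). assert (Hs2 := Rmin_r (a / 2) (t / 2)).
    assert (Hs3 : 0 < s) by (apply Rmin_pos; lra). fold s in Hs1, Hs2.
    specialize (H s ltac:(unfold in01; lra) ltac:(rewrite Rminus_0_r, Rabs_right; lra)).
    specialize (Hmvt s t ltac:(lra) ltac:(lra) ltac:(lra)).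
    apply Rabs_def2 in H. lra. }
  intros t [Ht0 Ht1].
  destruct (Req_dec t 0) as [-> | Hn0]; [lra|].
  destruct (Req_dec t 1) as [-> | Hn1]; [|apply Hint; lra].
  destruct (Rle_or_lt (F 1) (F 0)) as [|Hlt]; auto. exfalso.
  destruct (proj1 (limit1_in_iff _ _ _ _) (Hc 1 ltac:(unfold in01; lra)) (F 1 - F 0) ltac:(lra))
    as [a [Ha H]].
  set (s := Rmax (1 - a / 2) (1 / 2)).
  assert (Hs1 := Rmax_l (1 - a / 2) (1 / 2)). assert (Hs2 := Rmax_r (1 - a / 2) (1 / 2)).
  assert (Hs3 : s < 1) by (unfold s, Rmax; destruct (Rle_dec _ _); lra). fold s in Hs1, Hs2.
  specialize (H s ltac:(unfold in01; lra) ltac:(rewrite Rabs_left; lra)).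
  specialize (Hint s ltac:(lra)). apply Rabs_def2 in H. lra.
Qed.

Lemma derivable_pt_lim_exp_lin K x : derivable_pt_lim (fun s => exp (K * s)) x (K * exp (K * x)).
Proof.
  apply (derivable_pt_lim_eq _ _ (exp (K * x) * (K * 1))); [ring|].
  apply (derivable_pt_lim_comp (fun s => K * s) exp); [|apply derivable_pt_lim_exp].
  apply (derivable_pt_lim_scal (fun s => s)). apply derivable_pt_lim_id.
Qed.

Lemma gronwall_on01 E E' K B :
  0 < K -> 0 <= B -> has_deriv_on01 E E' -> E 0 = 0 ->
  (forall x, in01 x -> E' x <= K * E x + B) -> forall t, in01 t -> E t <= B * exp K.
Proof.
  intros HK HB HE HE0 Hb t Ht.
  (* (E + B/K) e^(-K x) is nonincreasing *)
  set (F := fun x => 1 * (E x * exp (- K * x)) + B / K * exp (- K * x)).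
  assert (HF : F t <= F 0).
  { apply (has_deriv_on01_nonpos_le F (fun x => (E' x - K * E x - B) * exp (- K * x))); auto.
    - eapply has_deriv_on01_ext; [reflexivity| |].
      2: apply has_deriv_on01_lin; [apply (has_deriv_on01_mult _ E')|]; auto;
         apply has_deriv_on01_of_derivable; intros; apply derivable_pt_lim_exp_lin.
      intros x _. cbv beta. field. lra.
    - intros x Hx. specialize (Hb x Hx). pose proof (exp_pos (- K * x)). nra. }
  assert (HF0 : F 0 = B / K) by (unfold F; rewrite HE0, Rmult_0_r, exp_0; ring).
  assert (Hinv : exp (- K * t) * exp (K * t) = 1).
  { rewrite <- exp_plus. replace (- K * t + K * t) with 0 by ring. apply exp_0. }
  assert (Hmono : exp (K * t) <= exp K) by (apply exp_le; destruct Ht; nra).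
  assert (HKe : exp K - 1 <= K * exp K).
  { pose proof (exp_ineq1_le (- K)).
    assert (exp (- K) * exp K = 1) by (rewrite <- exp_plus; replace (- K + K) with 0 by ring; apply exp_0).
    pose proof (exp_pos K). nra. }
  assert (Ht' : E t + B / K <= B / K * exp (K * t)).
  { assert (Hrw : F t * exp (K * t) = (E t + B / K) * (exp (- K * t) * exp (K * t)))
      by (unfold F; ring).
    rewrite Hinv, Rmult_1_r in Hrw. rewrite <- Hrw.
    pose proof (exp_pos (K * t)). apply Rmult_le_compat_r; lra. }
  assert (B / K * (exp K - 1) <= B / K * (K * exp K)).
  { apply Rmult_le_compat_l; [apply Rmult_le_pos; [|left; apply Rinv_0_lt_compat]|]; lra. }
  assert (B / K * exp (K * t) <= B / K * exp K).
  { apply Rmult_le_compat_l; [apply Rmult_le_pos; [|left; apply Rinv_0_lt_compat]|]; lra. }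
  replace (B / K * (K * exp K)) with (B * exp K) in H by (field; lra).
  lra.
Qed.

(** * The linear equation y'' + lam^2 Q y = 0 *)

Lemma two_mul_abs_le a b : 2 * Rabs (a * b) <= a * a + b * b.
Proof.
  rewrite Rabs_mult. pose proof (Rabs_pos a); pose proof (Rabs_pos b).
  assert (Rabs a * Rabs a = a * a) by (rewrite <- Rabs_mult; apply Rabs_right; nra).
  assert (Rabs b * Rabs b = b * b) by (rewrite <- Rabs_mult; apply Rabs_right; nra).
  pose proof (pow2_ge_0 (Rabs a - Rabs b)). nra.
Qed.

Lemma solution_zero_init lam Q M y y1 y2 :
  (forall t, in01 t -> Rabs (Q t) <= M) ->
  has_deriv_on01 y y1 -> has_deriv_on01 y1 y2 ->
  (forall t, in01 t -> y2 t + lam ^ 2 * Q t * y t = 0) ->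
  y 0 = 0 -> y1 0 = 0 -> forall t, in01 t -> y t = 0.
Proof.
  intros HQ Hy Hy1 Heq Hy0 Hy10 t Ht.
  assert (HM : 0 <= M) by (pose proof (HQ 0 ltac:(unfold in01; lra)); pose proof (Rabs_pos (Q 0)); lra).
  set (K := 1 + lam ^ 2 * M).
  assert (HK : 0 < K) by (unfold K; pose proof (pow2_ge_0 lam); nra).
  assert (Henergy : has_deriv_on01 (fun t => 1 * (y1 t * y1 t) + 1 * (y t * y t))
     (fun t => 1 * (y2 t * y1 t + y1 t * y2 t) + 1 * (y1 t * y t + y t * y1 t)))
    by (apply has_deriv_on01_lin; apply has_deriv_on01_mult; auto).
  enough (HE : 1 * (y1 t * y1 t) + 1 * (y t * y t) <= 0 * exp K) by nra.
  apply (gronwall_on01 _ _ K 0 HK (Rle_refl 0) Henergy); auto; [cbv beta; rewrite Hy0, Hy10; ring|].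
  intros x Hx.
  replace (y2 x) with (- (lam ^ 2 * Q x * y x)) by (specialize (Heq x Hx); lra).
  replace (1 * (- (lam ^ 2 * Q x * y x) * y1 x + y1 x * - (lam ^ 2 * Q x * y x)) +
           1 * (y1 x * y x + y x * y1 x))
    with (2 * (y1 x * y x) * (1 - lam ^ 2 * Q x)) by ring.
  assert (HQK : Rabs (1 - lam ^ 2 * Q x) <= K).
  { unfold K. eapply Rle_trans; [apply Rabs_triang|].
    rewrite Rabs_R1, Rabs_Ropp, Rabs_mult, (Rabs_right (lam ^ 2)) by (apply Rle_ge, pow2_ge_0).
    specialize (HQ x Hx). pose proof (pow2_ge_0 lam). nra. }
  pose proof (two_mul_abs_le (y1 x) (y x)).
  eapply Rle_trans; [apply Rle_abs|].
  rewrite !Rabs_mult, (Rabs_right 2) by lra.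
  pose proof (Rabs_pos (y1 x) ). pose proof (Rabs_pos (y x)). pose proof (Rabs_pos (1 - lam ^ 2 * Q x)).
  rewrite Rabs_mult in *. nra.
Qed.

Lemma has_deriv_on01_unique f f' g' x :
  has_deriv_on01 f f' -> has_deriv_on01 f g' -> in01 x -> f' x = g' x.
Proof.
  intros Hf Hg Hx.
  apply (single_limit (fun y => (f y - f x) / (y - x)) (fun y => in01 y /\ y <> x) _ _ x);
    [|apply Hf; auto | apply Hg; auto].
  intros alp Halp. unfold Rdist.
  set (h := Rmin (alp / 2) (1 / 2)).
  assert (Hh1 := Rmin_l (alp / 2) (1 / 2)). assert (Hh2 := Rmin_r (alp / 2) (1 / 2)).
  assert (Hh : 0 < h) by (apply Rmin_pos; lra). fold h in Hh1, Hh2. destruct Hx.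
  destruct (Rle_or_lt x (1 / 2)).
  - exists (x + h). split; [split; [unfold in01|]; lra|].
    replace (x + h - x) with h by ring. rewrite Rabs_right; lra.
  - exists (x - h). split; [split; [unfold in01|]; lra|].
    replace (x - h - x) with (- h) by ring. rewrite Rabs_Ropp, Rabs_right; lra.
Qed.

Lemma det2_neq0 p q r s :
  (forall a b, a * p + b * q = 0 -> a * r + b * s = 0 -> a = 0 /\ b = 0) -> p * s - r * q <> 0.
Proof.
  intros Hind Hdet.
  destruct (Hind s (- r)) as [Hs Hr]; [lra | lra|].
  destruct (Hind q (- p)) as [Hq Hp]; [lra | subst; lra|].
  destruct (Hind 1 0) as [H1 _]; subst; lra.
Qed.

Lemma wronskian0_neq0 lam Q M u u1 u2 v v1 v2 :
  (forall t, in01 t -> Rabs (Q t) <= M) ->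
  has_deriv_on01 u u1 -> has_deriv_on01 u1 u2 -> (forall t, in01 t -> u2 t + lam ^ 2 * Q t * u t = 0) ->
  has_deriv_on01 v v1 -> has_deriv_on01 v1 v2 -> (forall t, in01 t -> v2 t + lam ^ 2 * Q t * v t = 0) ->
  (forall a b, (forall t, in01 t -> a * u t + b * v t = 0) -> a = 0 /\ b = 0) ->
  u 0 * v1 0 - u1 0 * v 0 <> 0.
Proof.
  intros HQ Hu Hu1 Hue Hv Hv1 Hve Hind. apply det2_neq0. intros a b H0 H1. apply Hind.
  apply (solution_zero_init lam Q M _ (fun t => a * u1 t + b * v1 t) (fun t => a * u2 t + b * v2 t));
    auto; try apply has_deriv_on01_lin; auto.
  intros s Hs. specialize (Hue s Hs). specialize (Hve s Hs).
  replace (a * u2 s + b * v2 s + lam ^ 2 * Q s * (a * u s + b * v s)) with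
    (a * (u2 s + lam ^ 2 * Q s * u s) + b * (v2 s + lam ^ 2 * Q s * v s)) by ring.
  rewrite Hue, Hve; ring.
Qed.

Lemma is_basis01_of_wronskian lam Q M U U1 U2 V V1 V2 :
  (forall t, in01 t -> Rabs (Q t) <= M) ->
  has_deriv_on01 U U1 -> has_deriv_on01 U1 U2 -> (forall t, in01 t -> U2 t + lam ^ 2 * Q t * U t = 0) ->
  has_deriv_on01 V V1 -> has_deriv_on01 V1 V2 -> (forall t, in01 t -> V2 t + lam ^ 2 * Q t * V t = 0) ->
  U 0 * V1 0 - U1 0 * V 0 <> 0 -> is_basis01 lam Q U V.
Proof.
  intros HQ HU HU1 HUe HV HV1 HVe HW.
  split; [exists U1, U2; auto|]. split; [exists V1, V2; auto|]. split.
  - intros a b Hab.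
    assert (Hd : a * U1 0 + b * V1 0 = 0).
    { apply (has_deriv_on01_unique (fun t => a * U t + b * V t) (fun t => a * U1 t + b * V1 t) (fun _ => 0));
        [apply has_deriv_on01_lin; auto | | unfold in01; lra].
      apply (has_deriv_on01_ext (fun _ => 0) (fun _ => 0)); [intros; rewrite Hab; auto | auto |].
      apply has_deriv_on01_of_derivable. intros. apply derivable_pt_lim_const. }
    specialize (Hab 0 ltac:(unfold in01; lra)).
    split; apply Rmult_eq_reg_r with (U 0 * V1 0 - U1 0 * V 0); auto.
    + replace (a * (U 0 * V1 0 - U1 0 * V 0)) with
        (V1 0 * (a * U 0 + b * V 0) - V 0 * (a * U1 0 + b * V1 0)) by ring.
      rewrite Hab, Hd. ring.
    + replace (b * (U 0 * V1 0 - U1 0 * V 0)) with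
        (U 0 * (a * U1 0 + b * V1 0) - U1 0 * (a * U 0 + b * V 0)) by ring.
      rewrite Hab, Hd. ring.
  - intros y [y1 [y2 [Hy [Hy1 Hye]]]].
    set (a := (y 0 * V1 0 - y1 0 * V 0) / (U 0 * V1 0 - U1 0 * V 0)).
    set (b := (U 0 * y1 0 - U1 0 * y 0) / (U 0 * V1 0 - U1 0 * V 0)).
    exists a, b. intros t Ht.
    enough (1 * (1 * y t + - a * U t) + - b * V t = 0) by lra.
    apply (solution_zero_init lam Q M (fun t => 1 * (1 * y t + - a * U t) + - b * V t)
      (fun t => 1 * (1 * y1 t + - a * U1 t) + - b * V1 t)
      (fun t => 1 * (1 * y2 t + - a * U2 t) + - b * V2 t)); auto;
      try (apply (has_deriv_on01_lin 1 (fun t => 1 * _ t + - a * _ t)); auto; apply has_deriv_on01_lin; auto).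
    + intros s Hs. specialize (Hye s Hs). specialize (HUe s Hs). specialize (HVe s Hs).
      replace (1 * (1 * y2 s + - a * U2 s) + - b * V2 s + lam ^ 2 * Q s * (1 * (1 * y s + - a * U s) + - b * V s))
        with ((y2 s + lam ^ 2 * Q s * y s) - a * (U2 s + lam ^ 2 * Q s * U s) - b * (V2 s + lam ^ 2 * Q s * V s))
        by ring.
      rewrite Hye, HUe, HVe. ring.
    + unfold a, b. field. auto.
    + unfold a, b. field. auto.
Qed.

(** * Existence for y'' = G(t, y) by Picard iteration *)

Lemma continuity_pt_of_lipschitz f x c : 0 <= c ->
  (forall y, Rabs (f y - f x) <= c * Rabs (y - x)) -> continuity_pt f x.
Proof.
  intros Hc H. apply continuity_pt_iff. intros eps He.
  exists (eps / (c + 1)). split; [apply Rdiv_lt_0_compat; lra|].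
  intros y Hy. eapply Rle_lt_trans; [apply H|].
  apply Rle_lt_trans with ((c + 1) * Rabs (y - x)).
  - apply Rmult_le_compat_r; [apply Rabs_pos|lra].
  - replace eps with ((c + 1) * (eps / (c + 1))) by (field; lra).
    apply Rmult_lt_compat_l; lra.
Qed.

Definition clamp (t : R) : R := Rmax 0 (Rmin 1 t).

Ltac clamp_cases t :=
  destruct (Rle_or_lt 1 t); [rewrite (Rmin_left 1 t) by lra | rewrite (Rmin_right 1 t) by lra];
  try (destruct (Rle_or_lt 0 t); [rewrite (Rmax_right 0 t) by lra | rewrite (Rmax_left 0 t) by lra]);
  try rewrite (Rmax_right 0 1) by lra.

Lemma clamp_in01 t : in01 (clamp t).
Proof. unfold clamp, in01. clamp_cases t; lra. Qed.

Lemma clamp_id t : in01 t -> clamp t = t.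
Proof. unfold clamp, in01. intros. clamp_cases t; lra. Qed.

Lemma continuity_pt_clamp t : continuity_pt clamp t.
Proof.
  apply (continuity_pt_of_lipschitz _ _ 1); [lra|]. intros y. rewrite Rmult_1_l.
  unfold clamp. clamp_cases y; clamp_cases t;
  unfold Rabs; repeat match goal with |- context [Rcase_abs ?a] => destruct (Rcase_abs a) end; lra.
Qed.

Lemma pow_mul_small A r eps : 0 <= r < 1 -> 0 < eps -> exists N, A * r ^ N < eps.
Proof.
  intros Hr He.
  destruct (pow_lt_1_zero r ltac:(rewrite Rabs_right; lra) (eps / (Rabs A + 1))) as [N HN];
    [apply Rdiv_lt_0_compat; pose proof (Rabs_pos A); lra|].
  exists N. specialize (HN N (le_n N)). rewrite Rabs_right in HN by (apply Rle_ge, pow_le; lra).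
  pose proof (Rabs_pos A). pose proof (Rle_abs A). pose proof (pow_le r N (proj1 Hr)).
  assert (eps / (Rabs A + 1) * (Rabs A + 1) = eps) by (field; lra).
  nra.
Qed.

Lemma le_0_of_le_pow x A r : 0 <= r < 1 -> (forall n, x <= A * r ^ n) -> x <= 0.
Proof.
  intros Hr H. destruct (Rle_or_lt x 0) as [|Hx]; auto.
  destruct (pow_mul_small A r x Hr Hx) as [N HN]. specialize (H N). lra.
Qed.

Lemma pow_le_pow_of_le_1 r n m : 0 <= r <= 1 -> (n <= m)%nat -> r ^ m <= r ^ n.
Proof.
  intros Hr Hnm. induction Hnm; [lra|].
  simpl. pose proof (pow_le r m (proj1 Hr)). nra.
Qed.

Lemma geometric_cauchy (x : nat -> R) C r : 0 <= r < 1 ->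
  (forall n, Rabs (x (S n) - x n) <= C * r ^ n) ->
  forall n m, (n <= m)%nat -> Rabs (x m - x n) <= C * r ^ n / (1 - r).
Proof.
  intros Hr Hstep n m Hnm.
  assert (HC : 0 <= C) by (pose proof (Hstep O); pose proof (Rabs_pos (x 1%nat - x O)); simpl in *; lra).
  assert (Hk : forall k, Rabs (x (n + k)%nat - x n) <= C * (r ^ n - r ^ (n + k)) / (1 - r)).
  { induction k.
    - rewrite Nat.add_0_r. unfold Rminus. rewrite !Rplus_opp_r, Rabs_R0, Rmult_0_r. unfold Rdiv. lra.
    - replace (n + S k)%nat with (S (n + k)) by lia.
      replace (x (S (n + k)) - x n) with ((x (S (n + k)) - x (n + k)%nat) + (x (n + k)%nat - x n)) by ring.
      eapply Rle_trans; [apply Rabs_triang|]. pose proof (Hstep (n + k)%nat).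
      replace (C * (r ^ n - r ^ S (n + k)) / (1 - r)) with
        (C * r ^ (n + k) + C * (r ^ n - r ^ (n + k)) / (1 - r)) by (simpl; field; lra).
      lra. }
  replace m with (n + (m - n))%nat by lia. eapply Rle_trans; [apply Hk|].
  pose proof (pow_le r (n + (m - n)) (proj1 Hr)).
  apply Rmult_le_compat_r; [left; apply Rinv_0_lt_compat; lra|]. nra.
Qed.

Lemma continuity_pt_uniform_limit (f : nat -> R -> R) (F : R -> R) (e : nat -> R) :
  (forall n t, continuity_pt (f n) t) -> (forall n s, Rabs (f n s - F s) <= e n) ->
  (forall eps, 0 < eps -> exists N, e N < eps) -> forall t, continuity_pt F t.
Proof.
  intros Hf He Hsmall t. apply continuity_pt_iff. intros eps Heps.
  destruct (Hsmall (eps / 3) ltac:(lra)) as [N HN].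
  destruct (proj1 (continuity_pt_iff _ _) (Hf N t) (eps / 3) ltac:(lra)) as [d [Hd Hd']].
  exists d. split; auto. intros y Hy. specialize (Hd' y Hy).
  pose proof (He N y). pose proof (He N t).
  replace (F y - F t) with (- (f N y - F y) + (f N y - f N t) + (f N t - F t)) by ring.
  eapply Rle_lt_trans; [apply Rabs_triang|]. eapply Rle_lt_trans; [apply Rplus_le_compat_r, Rabs_triang|].
  rewrite Rabs_Ropp. lra.
Qed.

(* The limit is taken along [clamp s], so that it is continuous on all of R. *)
Lemma uniform_limit_geometric (f : nat -> R -> R) C r : 0 <= r < 1 ->
  (forall n t, continuity_pt (f n) t) ->
  (forall n s, in01 s -> Rabs (f (S n) s - f n s) <= C * r ^ n) ->
  exists F, (forall t, continuity_pt F t) /\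
    forall n s, in01 s -> Rabs (f n s - F s) <= C * r ^ n / (1 - r).
Proof.
  intros Hr Hf Hstep.
  set (g := fun n s => f n (clamp s)).
  assert (Hcau : forall s n m, (n <= m)%nat -> Rabs (g m s - g n s) <= C * r ^ n / (1 - r))
    by (intros s; apply geometric_cauchy; auto; intros n; apply Hstep, clamp_in01).
  assert (Hsmall : forall eps, 0 < eps -> exists N, C * r ^ N / (1 - r) < eps).
  { intros eps He. destruct (pow_mul_small (C / (1 - r)) r eps Hr He) as [N HN].
    exists N. replace (C * r ^ N / (1 - r)) with (C / (1 - r) * r ^ N) by (field; lra). auto. }
  assert (Hmono : forall n m, (n <= m)%nat -> C * r ^ m / (1 - r) <= C * r ^ n / (1 - r)).
  { intros n m Hnm.
    assert (HC : 0 <= C).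
    { pose proof (Hstep O 0 ltac:(unfold in01; lra)). pose proof (Rabs_pos (f 1%nat 0 - f O 0)).
      simpl in *. lra. }
    pose proof (pow_le_pow_of_le_1 r n m ltac:(lra) Hnm).
    apply Rmult_le_compat_r; [left; apply Rinv_0_lt_compat; lra|]. apply Rmult_le_compat_l; auto. }
  set (F := fun s => real (Lim_seq (fun n => g n s))).
  assert (Hlim : forall s, is_lim_seq (fun n => g n s) (F s)).
  { intros s. destruct (proj2 (ex_lim_seq_cauchy_corr (fun n => g n s))) as [l Hl].
    - intros eps. destruct (Hsmall eps (cond_pos eps)) as [N HN]. exists N. intros n m Hn Hm.
      destruct (Nat.le_ge_cases n m) as [Hnm|Hnm].
      + rewrite Rabs_minus_sym. eapply Rle_lt_trans; [apply Hcau; auto|].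
        eapply Rle_lt_trans; [apply Hmono; exact Hn | exact HN].
      + eapply Rle_lt_trans; [apply Hcau; auto|].
        eapply Rle_lt_trans; [apply Hmono; exact Hm | exact HN].
    - unfold F. rewrite (is_lim_seq_unique _ _ Hl). exact Hl. }
  assert (Hbound : forall n s, Rabs (g n s - F s) <= C * r ^ n / (1 - r)).
  { intros n s. apply Rle_plus_epsilon. intros eps He.
    destruct (proj1 (is_lim_seq_Reals _ _) (Hlim s) eps He) as [N HN].
    specialize (HN (max N n) ltac:(lia)). unfold Rdist in HN.
    specialize (Hcau s n (max N n) ltac:(lia)).
    replace (g n s - F s) with ((g n s - g (max N n) s) + (g (max N n) s - F s)) by ring.
    eapply Rle_trans; [apply Rabs_triang|]. rewrite Rabs_minus_sym. lra. }
  exists F. split.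
  - apply (continuity_pt_uniform_limit g F (fun n => C * r ^ n / (1 - r))); auto.
    intros n t. apply (continuity_pt_comp clamp (f n)); [apply continuity_pt_clamp | apply Hf].
  - intros n s Hs. specialize (Hbound n s). unfold g in Hbound. rewrite clamp_id in Hbound; auto.
Qed.

Lemma ex_RInt_of_continuity h a b : (forall x, continuity_pt h x) -> ex_RInt h a b.
Proof.
  intros H. apply (ex_RInt_continuous (V := R_CompleteNormedModule)).
  intros z _. apply continuity_pt_filterlim, H.
Qed.

Lemma derivable_pt_lim_RInt h t :
  (forall x, continuity_pt h x) -> derivable_pt_lim (fun r => RInt h 0 r) t (h t).
Proof.
  intros H. apply is_derive_Reals.
  apply (is_derive_RInt (V := R_CompleteNormedModule) h (fun r => RInt h 0 r) 0 t).
  - apply filter_forall. intros x. apply (RInt_correct (V := R_CompleteNormedModule)).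
    apply ex_RInt_of_continuity; auto.
  - apply continuity_pt_filterlim, H.
Qed.

Lemma continuity_pt_RInt h t : (forall x, continuity_pt h x) -> continuity_pt (fun r => RInt h 0 r) t.
Proof. intros H. apply (derivable_pt_lim_continuity_pt _ _ (h t)), derivable_pt_lim_RInt; auto. Qed.

Lemma Rabs_RInt_le h phi t : 0 <= t ->
  (forall x, continuity_pt h x) -> (forall x, continuity_pt phi x) ->
  (forall s, 0 <= s <= t -> Rabs (h s) <= phi s) -> Rabs (RInt h 0 t) <= RInt phi 0 t.
Proof.
  intros Ht Hh Hp Hb. apply (norm_RInt_le h phi 0 t); auto;
    apply (RInt_correct (V := R_CompleteNormedModule)), ex_RInt_of_continuity; auto.
Qed.

Lemma RInt_scal_exp K c t : 0 < K -> RInt (fun s => c * exp (K * s)) 0 t = c / K * (exp (K * t) - 1).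
Proof.
  intros HK. apply (is_RInt_unique (V := R_CompleteNormedModule)).
  replace (c / K * (exp (K * t) - 1)) with (minus (c / K * exp (K * t)) (c / K * exp (K * 0)))
    by (rewrite Rmult_0_r, exp_0; unfold minus, plus, opp; simpl; ring).
  apply (is_RInt_derive (V := R_CompleteNormedModule) (fun s => c / K * exp (K * s))).
  - intros x _. apply is_derive_Reals.
    apply (derivable_pt_lim_eq _ _ (c / K * (K * exp (K * x)))); [field; lra|].
    apply derivable_pt_lim_scal, derivable_pt_lim_exp_lin.
  - intros x _. apply continuity_pt_filterlim.
    apply (derivable_pt_lim_continuity_pt _ _ (c * (K * exp (K * x)))).
    apply derivable_pt_lim_scal, derivable_pt_lim_exp_lin.
Qed.

Lemma continuity_pt_scal_exp K c x : continuity_pt (fun s => c * exp (K * s)) x.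
Proof.
  apply (derivable_pt_lim_continuity_pt _ _ (c * (K * exp (K * x)))).
  apply derivable_pt_lim_scal, derivable_pt_lim_exp_lin.
Qed.

Section Picard.

Variables (G : R -> R -> R) (L a b : R).
Hypothesis HL : 0 <= L.
Hypothesis HG_lip : forall s x y, Rabs (G s x - G s y) <= L * Rabs (x - y).
Hypothesis HG_cont : forall x s, continuity_pt (fun s => G s x) s.

(* y'' = G(t, y), y(0) = a, y'(0) = b, integrated twice; f is read through [clamp], so only
   its values on [0,1] matter. *)
Definition picard_rhs (f : R -> R) (s : R) : R := G s (f (clamp s)).
Definition picard_op (f : R -> R) (t : R) : R :=
  a + b * t + RInt (fun r => RInt (picard_rhs f) 0 r) 0 t.

Lemma continuity_pt_picard_rhs f :
  (forall t, continuity_pt f t) -> forall s, continuity_pt (picard_rhs f) s.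
Proof.
  intros Hf s0. apply continuity_pt_iff. intros eps He.
  assert (Hfc : continuity_pt (fun s => f (clamp s)) s0)
    by (apply (continuity_pt_comp clamp f); [apply continuity_pt_clamp | apply Hf]).
  destruct (proj1 (continuity_pt_iff _ _) (HG_cont (f (clamp s0)) s0) (eps / 2) ltac:(lra))
    as [a1 [Ha1 H1]].
  destruct (proj1 (continuity_pt_iff _ _) Hfc (eps / 2 / (L + 1)) ltac:(apply Rdiv_lt_0_compat; lra))
    as [a2 [Ha2 H2]].
  exists (Rmin a1 a2). split; [apply Rmin_pos; auto|].
  intros y Hy. pose proof (Rmin_l a1 a2). pose proof (Rmin_r a1 a2).
  unfold picard_rhs. specialize (H1 y ltac:(lra)). specialize (H2 y ltac:(lra)). simpl in *.
  replace (G y (f (clamp y)) - G s0 (f (clamp s0))) with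
    ((G y (f (clamp y)) - G y (f (clamp s0))) + (G y (f (clamp s0)) - G s0 (f (clamp s0)))) by ring.
  eapply Rle_lt_trans; [apply Rabs_triang|].
  enough (Rabs (G y (f (clamp y)) - G y (f (clamp s0))) < eps / 2) by lra.
  eapply Rle_lt_trans; [apply HG_lip|].
  apply Rle_lt_trans with ((L + 1) * Rabs (f (clamp y) - f (clamp s0))).
  - apply Rmult_le_compat_r; [apply Rabs_pos | lra].
  - replace (eps / 2) with ((L + 1) * (eps / 2 / (L + 1))) by (field; lra).
    apply Rmult_lt_compat_l; lra.
Qed.

Lemma derivable_pt_lim_picard_op f : (forall t, continuity_pt f t) ->
  forall t, derivable_pt_lim (picard_op f) t (b + RInt (picard_rhs f) 0 t).
Proof.
  intros Hf t. unfold picard_op.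
  apply (derivable_pt_lim_eq _ _ (0 + b * 1 + RInt (picard_rhs f) 0 t)); [ring|].
  apply (derivable_pt_lim_plus (fun t => a + b * t) (fun t => RInt (fun r => RInt (picard_rhs f) 0 r) 0 t)).
  - apply (derivable_pt_lim_plus (fun _ => a) (fun t => b * t)); [apply derivable_pt_lim_const|].
    apply (derivable_pt_lim_scal (fun t => t)), derivable_pt_lim_id.
  - apply derivable_pt_lim_RInt. intros. apply continuity_pt_RInt, continuity_pt_picard_rhs; auto.
Qed.

(* Bielecki's weight e^(K s): for K = 1 + 2 L the factor L / K^2 is at most 1/4. *)
Lemma picard_op_weighted_lipschitz f g K D :
  (forall t, continuity_pt f t) -> (forall t, continuity_pt g t) -> 0 < K -> 0 <= D ->
  (forall s, in01 s -> Rabs (f s - g s) <= D * exp (K * s)) ->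
  forall t, in01 t -> Rabs (picard_op f t - picard_op g t) <= L * D / (K * K) * exp (K * t).
Proof.
  intros Hf Hg HK HD Hb t Ht.
  assert (Hrhs : forall s, continuity_pt (fun s => picard_rhs f s - picard_rhs g s) s)
    by (intros; apply continuity_pt_minus; apply continuity_pt_picard_rhs; auto).
  assert (Hinner : forall r, in01 r ->
    Rabs (RInt (picard_rhs f) 0 r - RInt (picard_rhs g) 0 r) <= L * D / K * exp (K * r)).
  { intros r Hr.
    rewrite <- (RInt_minus (V := R_CompleteNormedModule))
      by (apply ex_RInt_of_continuity, continuity_pt_picard_rhs; auto).
    eapply Rle_trans; [apply (Rabs_RInt_le _ (fun s => L * D * exp (K * s)))|].
    - destruct Hr; lra.
    - exact Hrhs.
    - intros; apply continuity_pt_scal_exp.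
    - intros s Hs. unfold picard_rhs, minus, plus, opp; simpl. eapply Rle_trans; [apply HG_lip|].
      rewrite clamp_id by (unfold in01 in *; lra). rewrite Rmult_assoc.
      apply Rmult_le_compat_l; auto. apply Hb. unfold in01 in *; lra.
    - rewrite RInt_scal_exp by auto. pose proof (exp_pos (K * r)).
      apply Rmult_le_compat_l; [apply Rmult_le_pos; [nra | left; apply Rinv_0_lt_compat; auto] | lra]. }
  unfold picard_op.
  replace (a + b * t + RInt (fun r => RInt (picard_rhs f) 0 r) 0 t -
           (a + b * t + RInt (fun r => RInt (picard_rhs g) 0 r) 0 t))
    with (RInt (fun r => RInt (picard_rhs f) 0 r) 0 t - RInt (fun r => RInt (picard_rhs g) 0 r) 0 t)
    by ring.
  rewrite <- (RInt_minus (V := R_CompleteNormedModule))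
    by (apply ex_RInt_of_continuity; intros; apply continuity_pt_RInt, continuity_pt_picard_rhs; auto).
  eapply Rle_trans; [apply (Rabs_RInt_le _ (fun s => L * D / K * exp (K * s)))|].
  - destruct Ht; lra.
  - intros x. apply continuity_pt_minus; apply continuity_pt_RInt, continuity_pt_picard_rhs; auto.
  - intros; apply continuity_pt_scal_exp.
  - intros s Hs. apply Hinner. unfold in01 in *; lra.
  - rewrite RInt_scal_exp by auto. pose proof (exp_pos (K * t)).
    replace (L * D / (K * K)) with (L * D / K / K) by (field; lra).
    apply Rmult_le_compat_l; [|lra].
    repeat apply Rmult_le_pos; auto; left; apply Rinv_0_lt_compat; auto.
Qed.

Fixpoint picard_iter (n : nat) : R -> R :=
  match n with O => fun _ => a | S n => picard_op (picard_iter n) end.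

Lemma continuity_pt_picard_iter n t : continuity_pt (picard_iter n) t.
Proof.
  revert t; induction n as [|n IH]; intros t; simpl.
  - apply continuity_pt_const. intros x y; reflexivity.
  - apply (derivable_pt_lim_continuity_pt _ _ _ (derivable_pt_lim_picard_op _ IH t)).
Qed.

Lemma contraction_factor_le_quarter : L / ((1 + 2 * L) * (1 + 2 * L)) <= 1 / 4.
Proof.
  apply Rmult_le_reg_r with ((1 + 2 * L) * (1 + 2 * L)); [nra|].
  field_simplify; [nra | nra].
Qed.

Lemma picard_iter_step_le : exists C, forall n s, in01 s ->
  Rabs (picard_iter (S n) s - picard_iter n s) <= C * (1 / 4) ^ n.
Proof.
  set (K := 1 + 2 * L). assert (HK : 0 < K) by (unfold K; lra).
  destruct (continuity_ab_maj (fun s => Rabs (picard_iter 1 s - picard_iter 0 s)) 0 1 ltac:(lra))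
    as [Mx [HMx _]].
  { intros c _. apply (continuity_pt_comp _ Rabs); [|apply Rcontinuity_abs].
    apply continuity_pt_minus; apply continuity_pt_picard_iter. }
  set (D0 := Rabs (picard_iter 1 Mx - picard_iter 0 Mx)).
  assert (HD0 : 0 <= D0) by apply Rabs_pos.
  assert (Hweighted : forall n s, in01 s ->
    Rabs (picard_iter (S n) s - picard_iter n s) <= D0 * (1 / 4) ^ n * exp (K * s)).
  { induction n as [|n IH]; intros s Hs.
    - simpl pow. rewrite Rmult_1_r. specialize (HMx s Hs). fold D0 in HMx.
      pose proof (exp_ineq1_le (K * s)). destruct Hs. assert (0 <= K * s) by nra. nra.
    - assert (HDn : 0 <= D0 * (1 / 4) ^ n) by (apply Rmult_le_pos; auto; apply pow_le; lra).
      change (picard_iter (S (S n)) s - picard_iter (S n) s) with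
        (picard_op (picard_iter (S n)) s - picard_op (picard_iter n) s).
      eapply Rle_trans;
        [apply (picard_op_weighted_lipschitz _ _ K (D0 * (1 / 4) ^ n));
           auto; intros; apply continuity_pt_picard_iter|].
      pose proof (exp_pos (K * s)). pose proof contraction_factor_le_quarter. fold K in H0.
      replace (L * (D0 * (1 / 4) ^ n) / (K * K)) with (L / (K * K) * (D0 * (1 / 4) ^ n)) by (field; lra).
      simpl pow. apply Rmult_le_compat_r; [lra|].
      replace (D0 * (1 / 4 * (1 / 4) ^ n)) with (1 / 4 * (D0 * (1 / 4) ^ n)) by ring.
      apply Rmult_le_compat_r; auto. }
  exists (D0 * exp K). intros n s Hs. eapply Rle_trans; [apply Hweighted; auto|].
  assert (exp (K * s) <= exp K) by (apply exp_le; destruct Hs; nra).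
  assert (0 <= D0 * (1 / 4) ^ n) by (apply Rmult_le_pos; auto; apply pow_le; lra). nra.
Qed.

Lemma picard_fixpoint : exists F, (forall t, continuity_pt F t) /\
  forall t, in01 t -> picard_op F t = F t.
Proof.
  destruct picard_iter_step_le as [C HC].
  destruct (uniform_limit_geometric picard_iter C (1 / 4)) as [F [HFc HFb]];
    [lra | apply continuity_pt_picard_iter | exact HC |].
  exists F. split; auto. intros t Ht.
  set (K := 1 + 2 * L). assert (HK : 0 < K) by (unfold K; lra).
  assert (HKt : exp (K * t) <= exp K) by (apply exp_le; destruct Ht; nra).
  enough (Rabs (picard_op F t - F t) <= 0) by (pose proof (Rabs_pos (picard_op F t - F t));
    apply Rminus_diag_uniq, Rabs_eq_0; lra).
  apply (le_0_of_le_pow _ (C / (1 - 1 / 4) * (1 / 4 * exp K + 1 / 4)) (1 / 4)); [lra|]. intros n.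
  set (D := C * (1 / 4) ^ n / (1 - 1 / 4)).
  assert (HD : 0 <= D) by (pose proof (HFb n 0 ltac:(unfold in01; lra)) as H0;
    pose proof (Rabs_pos (picard_iter n 0 - F 0)); unfold D; lra).
  replace (picard_op F t - F t) with
    ((picard_op F t - picard_op (picard_iter n) t) + (picard_iter (S n) t - F t)) by (simpl; ring).
  eapply Rle_trans; [apply Rabs_triang|].
  assert (Hstep : Rabs (picard_op F t - picard_op (picard_iter n) t) <= L * D / (K * K) * exp (K * t)).
  { apply picard_op_weighted_lipschitz; auto; [apply continuity_pt_picard_iter|].
    intros s Hs. rewrite Rabs_minus_sym. eapply Rle_trans; [apply HFb; auto|].
    pose proof (exp_ineq1_le (K * s)). destruct Hs. assert (0 <= K * s) by nra. fold D. nra. }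
  pose proof (HFb (S n) t Ht). pose proof contraction_factor_le_quarter. fold K in H0.
  replace (L * D / (K * K)) with (L / (K * K) * D) in Hstep by (field; lra).
  assert (L / (K * K) * D * exp (K * t) <= 1 / 4 * D * exp K).
  { assert (0 <= L / (K * K)) by (apply Rmult_le_pos; [auto | left; apply Rinv_0_lt_compat; nra]).
    apply Rmult_le_compat; [apply Rmult_le_pos; auto | left; apply exp_pos | |auto].
    apply Rmult_le_compat_r; auto. }
  unfold D in *. simpl pow in *. pose proof (exp_pos K).
  replace (C * (1 / 4 * (1 / 4) ^ n) / (1 - 1 / 4)) with (1 / 4 * (C * (1 / 4) ^ n / (1 - 1 / 4))) in H
    by field.
  replace (C / (1 - 1 / 4) * (1 / 4 * exp K + 1 / 4) * (1 / 4) ^ n) with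
    (1 / 4 * (C * (1 / 4) ^ n / (1 - 1 / 4)) * exp K + 1 / 4 * (C * (1 / 4) ^ n / (1 - 1 / 4)))
    by field.
  lra.
Qed.

Theorem picard_existence : exists W W1 H : R -> R,
  (forall t, derivable_pt_lim W t (W1 t)) /\ (forall t, derivable_pt_lim W1 t (H t)) /\
  W 0 = a /\ W1 0 = b /\ (forall t, in01 t -> H t = G t (W t)).
Proof.
  destruct picard_fixpoint as [F [HFc Hfix]].
  exists (picard_op F), (fun t => b + RInt (picard_rhs F) 0 t), (picard_rhs F).
  split; [apply derivable_pt_lim_picard_op; auto|]. split; [|split; [|split]].
  - intros t. apply (derivable_pt_lim_eq _ _ (0 + picard_rhs F t)); [ring|].
    apply (derivable_pt_lim_plus (fun _ => b)); [apply derivable_pt_lim_const|].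
    apply derivable_pt_lim_RInt, continuity_pt_picard_rhs; auto.
  - unfold picard_op. rewrite RInt_point. unfold zero; simpl. ring.
  - rewrite RInt_point. unfold zero; simpl. ring.
  - intros t Ht. unfold picard_rhs. rewrite clamp_id, Hfix; auto.
Qed.

End Picard.

Lemma linear_solution_exists lam Q M a b :
  (forall t, continuity_pt Q t) -> (forall t, in01 t -> Rabs (Q t) <= M) ->
  exists U U1 U2 : R -> R,
    (forall t, derivable_pt_lim U t (U1 t)) /\ (forall t, derivable_pt_lim U1 t (U2 t)) /\
    (forall t, in01 t -> U2 t + lam ^ 2 * Q t * U t = 0) /\ U 0 = a /\ U1 0 = b.
Proof.
  intros HQc HQ.
  assert (HM : 0 <= M) by (pose proof (HQ 0 ltac:(unfold in01; lra)); pose proof (Rabs_pos (Q 0)); lra).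
  destruct (picard_existence (fun s x => - lam ^ 2 * Q (clamp s) * x) (lam ^ 2 * M) a b)
    as [U [U1 [U2 [H1 [H2 [H3 [H4 H5]]]]]]].
  - pose proof (pow2_ge_0 lam). nra.
  - intros s x y.
    replace (- lam ^ 2 * Q (clamp s) * x - - lam ^ 2 * Q (clamp s) * y) with
      (- lam ^ 2 * Q (clamp s) * (x - y)) by ring.
    rewrite !Rabs_mult, Rabs_Ropp, (Rabs_right (lam ^ 2)) by (apply Rle_ge, pow2_ge_0).
    pose proof (HQ (clamp s) (clamp_in01 s)). pose proof (pow2_ge_0 lam). pose proof (Rabs_pos (x - y)).
    apply Rmult_le_compat_r; auto. apply Rmult_le_compat_l; auto.
  - intros x s0. apply (continuity_pt_comp (fun s => Q (clamp s)) (fun z => - lam ^ 2 * z * x)).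
    + apply (continuity_pt_comp clamp Q); [apply continuity_pt_clamp | apply HQc].
    + apply (derivable_pt_lim_continuity_pt _ _ (- lam ^ 2 * x)).
      apply (derivable_pt_lim_ext (fun z => (- lam ^ 2 * x) * z)); [intros; ring|].
      apply (derivable_pt_lim_eq _ _ (- lam ^ 2 * x * 1)); [ring|].
      apply derivable_pt_lim_scal, derivable_pt_lim_id.
  - exists U, U1, U2. repeat split; auto.
    intros t Ht. rewrite H5, clamp_id by auto. ring.
Qed.

Lemma continuous_sup_abs01 U : (forall t, continuity_pt U t) ->
  exists M, is_sup_abs01 U M /\ forall t, in01 t -> Rabs (U t) <= M.
Proof.
  intros H. destruct (continuity_ab_maj (fun t => Rabs (U t)) 0 1 ltac:(lra)) as [T [HT1 HT2]].
  { intros c _. apply (continuity_pt_comp U Rabs); [auto | apply Rcontinuity_abs]. }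
  exists (Rabs (U T)). split.
  - split.
    + intros r [t [Ht ->]]. apply HT1. exact Ht.
    + intros b Hb. apply Hb. exists T. split; auto.
  - intros t Ht. apply HT1. exact Ht.
Qed.

Lemma forcing_sqr_le lam d u D M : d ^ 2 <= D -> Rabs u <= M ->
  lam ^ 2 * d * u * (lam ^ 2 * d * u) <= lam ^ 4 * D * M ^ 2.
Proof.
  intros Hd Hu.
  assert (Hu2 : u * u <= M ^ 2).
  { replace (u * u) with (Rabs u ^ 2) by (rewrite pow2_abs; ring).
    apply pow_incr. split; [apply Rabs_pos | auto]. }
  replace (lam ^ 2 * d * u * (lam ^ 2 * d * u)) with ((lam ^ 2) ^ 2 * d ^ 2 * (u * u)) by ring.
  replace (lam ^ 4) with ((lam ^ 2) ^ 2) by ring.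
  apply Rmult_le_compat; [apply Rmult_le_pos; apply pow2_ge_0 | apply Rle_0_sqr | | auto].
  apply Rmult_le_compat_l; [apply pow2_ge_0 | auto].
Qed.

(* The rate of change of the energy e1^2 + lam^2 qb e^2 when e'' = - lam^2 qb e + g. *)
Lemma energy_rate_le lam qb qb1 e e1 g eta' : 0 <= qb -> 0 <= eta' -> Rabs qb1 <= eta' * qb ->
  1 * ((- (lam ^ 2 * qb * e) + g) * e1 + e1 * (- (lam ^ 2 * qb * e) + g)) +
  lam ^ 2 * (qb1 * (e * e) + qb * (e1 * e + e * e1))
  <= (1 + eta') * (1 * (e1 * e1) + lam ^ 2 * (qb * (e * e))) + g * g.
Proof.
  intros Hqb Heta Hqb1.
  assert (Hqb1e : lam ^ 2 * (qb1 * (e * e)) <= eta' * (lam ^ 2 * (qb * (e * e)))).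
  { replace (eta' * (lam ^ 2 * (qb * (e * e)))) with (lam ^ 2 * (eta' * qb * (e * e))) by ring.
    apply Rmult_le_compat_l; [apply pow2_ge_0|]. apply Rmult_le_compat_r; [apply Rle_0_sqr|].
    pose proof (Rle_abs qb1). lra. }
  pose proof (two_mul_abs_le e1 g). pose proof (Rle_abs (e1 * g)).
  assert (0 <= lam ^ 2 * (qb * (e * e))) by (apply Rmult_le_pos; [apply pow2_ge_0 | apply Rmult_le_pos;
    [auto | apply Rle_0_sqr]]).
  assert (0 <= eta' * (e1 * e1)) by (apply Rmult_le_pos; [auto | apply Rle_0_sqr]).
  replace (1 * ((- (lam ^ 2 * qb * e) + g) * e1 + e1 * (- (lam ^ 2 * qb * e) + g)) +
           lam ^ 2 * (qb1 * (e * e) + qb * (e1 * e + e * e1)))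
    with (2 * (e1 * g) + lam ^ 2 * (qb1 * (e * e))) by ring.
  lra.
Qed.

Section Perturbation.

Variables (lam : R) (q qb qb1 : R -> R) (c eta' DQ2 : R).
Hypothesis Hqb : has_deriv_on01 qb qb1.
Hypothesis Hqb_low : forall t, in01 t -> c <= qb t.
Hypothesis Hc : 0 < c.
Hypothesis Hqb1 : forall t, in01 t -> Rabs (qb1 t) <= eta' * qb t.
Hypothesis Heta' : 0 <= eta'.
Hypothesis Hclose : forall t, in01 t -> (q t - qb t) ^ 2 <= DQ2.

(* Energy estimate for e = u - U, where e'' + lam^2 qb e = lam^2 (q - qb) U, with the energy
   e'^2 + lam^2 qb e^2. *)
Lemma solution_deviation_le u u1 u2 U U1 U2 MU :
  has_deriv_on01 u u1 -> has_deriv_on01 u1 u2 -> (forall t, in01 t -> u2 t + lam ^ 2 * qb t * u t = 0) ->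
  has_deriv_on01 U U1 -> has_deriv_on01 U1 U2 -> (forall t, in01 t -> U2 t + lam ^ 2 * q t * U t = 0) ->
  U 0 = u 0 -> U1 0 = u1 0 -> (forall t, in01 t -> Rabs (U t) <= MU) ->
  forall t, in01 t -> lam ^ 2 * c * (u t - U t) ^ 2 <= lam ^ 4 * DQ2 * MU ^ 2 * exp (1 + eta').
Proof.
  intros Hu Hu1 Hue HU HU1 HUe HU0 HU10 HMU t Ht.
  set (e := fun t => 1 * u t + -1 * U t). set (e1 := fun t => 1 * u1 t + -1 * U1 t).
  set (e2 := fun t => 1 * u2 t + -1 * U2 t).
  assert (He : has_deriv_on01 e e1) by (apply has_deriv_on01_lin; auto).
  assert (He1 : has_deriv_on01 e1 e2) by (apply has_deriv_on01_lin; auto).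
  set (B := lam ^ 4 * DQ2 * MU ^ 2).
  assert (HDQ : 0 <= DQ2)
    by (pose proof (Hclose 0 ltac:(unfold in01; lra)); pose proof (pow2_ge_0 (q 0 - qb 0)); lra).
  assert (HB : 0 <= B) by (unfold B; replace (lam ^ 4) with ((lam ^ 2) ^ 2) by ring;
    pose proof (pow2_ge_0 MU); pose proof (pow2_ge_0 (lam ^ 2)); apply Rmult_le_pos; [|auto];
    apply Rmult_le_pos; auto).
  assert (HE : has_deriv_on01 (fun t => 1 * (e1 t * e1 t) + lam ^ 2 * (qb t * (e t * e t)))
    (fun t => 1 * (e2 t * e1 t + e1 t * e2 t) +
              lam ^ 2 * (qb1 t * (e t * e t) + qb t * (e1 t * e t + e t * e1 t))))
    by (apply has_deriv_on01_lin; repeat apply has_deriv_on01_mult; auto).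
  assert (Henergy := gronwall_on01 _ _ (1 + eta') B ltac:(lra) HB HE).
  cbv beta in Henergy.
  replace ((u t - U t) ^ 2) with (e t * e t) by (unfold e; ring).
  assert (Hq : lam ^ 2 * c * (e t * e t) <= lam ^ 2 * (qb t * (e t * e t))).
  { rewrite Rmult_assoc. apply Rmult_le_compat_l; [apply pow2_ge_0|].
    apply Rmult_le_compat_r; [apply Rle_0_sqr | auto]. }
  assert (He1sq : 0 <= e1 t * e1 t) by nra.
  enough (1 * (e1 t * e1 t) + lam ^ 2 * (qb t * (e t * e t)) <= B * exp (1 + eta')) by lra.
  apply Henergy; auto; [unfold e, e1; rewrite HU0, HU10; ring|]. intros x Hx.
  set (g := lam ^ 2 * (q x - qb x) * U x).
  assert (He2 : e2 x = - (lam ^ 2 * qb x * e x) + g).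
  { unfold e2, e, g. pose proof (Hue x Hx). pose proof (HUe x Hx).
    replace (u2 x) with (- (lam ^ 2 * qb x * u x)) by lra.
    replace (U2 x) with (- (lam ^ 2 * q x * U x)) by lra. ring. }
  rewrite He2.
  assert (Hg : g * g <= B) by (apply forcing_sqr_le; [apply Hclose | apply HMU]; auto).
  assert (Hrate := energy_rate_le lam (qb x) (qb1 x) (e x) (e1 x) g eta'
    ltac:(pose proof (Hqb_low x Hx); lra) Heta' (Hqb1 x Hx)).
  lra.
Qed.

Lemma solution_deviation_abs_le eps u u1 u2 U U1 U2 MU :
  0 < lam -> 0 <= eps -> lam ^ 2 * DQ2 * exp (1 + eta') <= eps ^ 2 * c ->
  has_deriv_on01 u u1 -> has_deriv_on01 u1 u2 -> (forall t, in01 t -> u2 t + lam ^ 2 * qb t * u t = 0) ->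
  has_deriv_on01 U U1 -> has_deriv_on01 U1 U2 -> (forall t, in01 t -> U2 t + lam ^ 2 * q t * U t = 0) ->
  U 0 = u 0 -> U1 0 = u1 0 -> (forall t, in01 t -> Rabs (U t) <= MU) ->
  forall t, in01 t -> Rabs (u t - U t) <= eps * MU.
Proof.
  intros Hlam Heps Hsmall Hu Hu1 Hue HU HU1 HUe HU0 HU10 HMU t Ht.
  assert (HMU0 : 0 <= MU) by (pose proof (HMU 0 ltac:(unfold in01; lra)); pose proof (Rabs_pos (U 0)); lra).
  pose proof (solution_deviation_le u u1 u2 U U1 U2 MU Hu Hu1 Hue HU HU1 HUe HU0 HU10 HMU t Ht) as Hdev.
  assert (Hl2 : 0 < lam ^ 2 * c) by (pose proof (pow_lt lam 2 Hlam); nra).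
  assert (Hsq : (u t - U t) ^ 2 <= (eps * MU) ^ 2).
  { apply Rmult_le_reg_l with (lam ^ 2 * c); auto. eapply Rle_trans; [exact Hdev|].
    replace (lam ^ 4 * DQ2 * MU ^ 2 * exp (1 + eta')) with (lam ^ 2 * (lam ^ 2 * DQ2 * exp (1 + eta')) * MU ^ 2)
      by ring.
    replace (lam ^ 2 * c * (eps * MU) ^ 2) with (lam ^ 2 * (eps ^ 2 * c) * MU ^ 2) by ring.
    apply Rmult_le_compat_r; [apply pow2_ge_0|]. apply Rmult_le_compat_l; [apply pow2_ge_0 | auto]. }
  rewrite <- (Rabs_right (eps * MU)) by (apply Rle_ge, Rmult_le_pos; auto).
  apply Rsqr_le_abs_0. unfold Rsqr. simpl in Hsq. lra.
Qed.

Lemma phase_function_approx alpha alpha' eps Mq :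
  (forall t, continuity_pt q t) -> (forall t, in01 t -> Rabs (q t) <= Mq) ->
  0 < lam -> 0 <= eps -> lam ^ 2 * DQ2 * exp (1 + eta') <= eps ^ 2 * c ->
  is_phase_function lam qb alpha alpha' -> is_approx_phase_function eps lam q alpha alpha'.
Proof.
  intros Hqc HqM Hlam Heps Hsmall
    [_ [_ [[u1 [u2 [Hu [Hu1 Hue]]]] [[v1 [v2 [Hv [Hv1 Hve]]]] [Hind _]]]]].
  set (u := phase_u alpha alpha') in *. set (v := phase_v alpha alpha') in *.
  assert (HqbM : forall t, in01 t -> Rabs (qb t) <= Mq + (1 + DQ2)).
  { intros t Ht. replace (qb t) with (q t - (q t - qb t)) by ring.
    eapply Rle_trans; [apply Rabs_triang|]. rewrite Rabs_Ropp.
    pose proof (HqM t Ht). pose proof (Hclose t Ht). pose proof (Rabs_pos (q t - qb t)).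
    assert (Rabs (q t - qb t) ^ 2 = (q t - qb t) ^ 2) by (simpl; rewrite !Rmult_1_r, <- Rabs_mult;
      apply Rabs_right, Rle_ge, Rle_0_sqr).
    nra. }
  destruct (linear_solution_exists lam q Mq (u 0) (u1 0) Hqc HqM) as [U [U1 [U2 [HU [HU1 [HUe [HU0 HU10]]]]]]].
  destruct (linear_solution_exists lam q Mq (v 0) (v1 0) Hqc HqM) as [V [V1 [V2 [HV [HV1 [HVe [HV0 HV10]]]]]]].
  assert (HUd := has_deriv_on01_of_derivable U U1 (fun t _ => HU t)).
  assert (HU1d := has_deriv_on01_of_derivable U1 U2 (fun t _ => HU1 t)).
  assert (HVd := has_deriv_on01_of_derivable V V1 (fun t _ => HV t)).
  assert (HV1d := has_deriv_on01_of_derivable V1 V2 (fun t _ => HV1 t)).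
  exists U, V. split.
  { apply (is_basis01_of_wronskian lam q Mq U U1 U2 V V1 V2); auto.
    rewrite HU0, HU10, HV0, HV10. apply (wronskian0_neq0 lam qb (Mq + (1 + DQ2)) u u1 u2 v v1 v2); auto. }
  destruct (continuous_sup_abs01 U) as [MU [HMU HMUb]];
    [intros t; apply (derivable_pt_lim_continuity_pt _ _ _ (HU t))|].
  destruct (continuous_sup_abs01 V) as [MV [HMV HMVb]];
    [intros t; apply (derivable_pt_lim_continuity_pt _ _ _ (HV t))|].
  exists MU, MV. split; [auto|]. split; [auto|]. intros t Ht. split.
  - apply (solution_deviation_abs_le eps u u1 u2 U U1 U2); auto.
  - apply (solution_deviation_abs_le eps v v1 v2 V V1 V2); auto.
Qed.

End Perturbation.

(** * The substitution q = w^(-4) *)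

Definition qrt (x : R) : R := Rpower x (- / 4).

Lemma qrt_pos x : 0 < qrt x.
Proof. apply exp_pos. Qed.

Lemma qrt_pow4 x : 0 < x -> qrt x ^ 4 = / x.
Proof.
  intros Hx. unfold qrt, Rpower.
  replace (exp (- / 4 * ln x) ^ 4) with (exp (- / 4 * ln x + - / 4 * ln x + - / 4 * ln x + - / 4 * ln x))
    by (rewrite !exp_plus; ring).
  replace (- / 4 * ln x + - / 4 * ln x + - / 4 * ln x + - / 4 * ln x) with (- ln x) by field.
  rewrite exp_Ropp, exp_ln; auto.
Qed.

Section QuarticRoot.

Variables (q q1 q2 : R -> R).
Hypothesis Hq : forall t, 0 < q t.
Hypothesis Hq1 : forall t, derivable_pt_lim q t (q1 t).
Hypothesis Hq2 : forall t, derivable_pt_lim q1 t (q2 t).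

Definition w_of (t : R) : R := qrt (q t).
Definition w1_of (t : R) : R := - / 4 * w_of t * (q1 t / q t).
Definition w2_of (t : R) : R :=
  - / 4 * (w1_of t * (q1 t / q t) + w_of t * ((q2 t * q t - q1 t * q1 t) / q t ^ 2)).

Lemma derivable_pt_lim_w_of t : derivable_pt_lim w_of t (w1_of t).
Proof.
  pose proof (Hq t). unfold w1_of, w_of, qrt, Rpower.
  apply (derivable_pt_lim_eq _ _ (exp (- / 4 * ln (q t)) * (- / 4 * (/ q t * q1 t)))); [field; lra|].
  apply (derivable_pt_lim_comp (fun t => - / 4 * ln (q t)) exp); [|apply derivable_pt_lim_exp].
  apply (derivable_pt_lim_scal (fun t => ln (q t))).
  apply (derivable_pt_lim_comp q ln); [apply Hq1 | apply derivable_pt_lim_ln; auto].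
Qed.

Lemma derivable_pt_lim_w1_of t : derivable_pt_lim w1_of t (w2_of t).
Proof.
  pose proof (Hq t). unfold w2_of.
  apply (derivable_pt_lim_ext (fun t => - / 4 * (w_of t * (q1 t / q t)))); [intros; unfold w1_of; ring|].
  apply derivable_pt_lim_scal, (derivable_pt_lim_mult w_of (fun t => q1 t / q t));
    [apply derivable_pt_lim_w_of|].
  apply (derivable_pt_lim_eq _ _ ((q2 t * q t - q1 t * q1 t) / (q t)²)); [unfold Rsqr; field; lra|].
  apply derivable_pt_lim_div; auto. lra.
Qed.

Lemma w_of_pow4 t : w_of t ^ 4 * q t = 1.
Proof. pose proof (Hq t). unfold w_of. rewrite qrt_pow4; auto. field. lra. Qed.

Lemma p_of_w_of t : p_of q q1 q2 t = 4 * w_of t ^ 3 * w2_of t.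
Proof.
  pose proof (Hq t). pose proof (w_of_pow4 t).
  replace (4 * w_of t ^ 3 * w2_of t) with
    (w_of t ^ 4 * (- / 4 * (- / 4 * (q1 t / q t) * (q1 t / q t) + (q2 t * q t - q1 t * q1 t) / q t ^ 2) * 4))
    by (unfold w2_of, w1_of; ring).
  replace (w_of t ^ 4) with (/ q t) by (field_simplify_eq; lra).
  unfold p_of. field. lra.
Qed.

End QuarticRoot.

Lemma p_of_inv_pow4 W W1 H t : 0 < W t ->
  p_of (fun t => / W t ^ 4) (fun t => -4 * W1 t / W t ^ 5)
       (fun t => 20 * W1 t ^ 2 / W t ^ 6 - 4 * H t / W t ^ 5) t = 4 * W t ^ 3 * H t.
Proof. intros HW. unfold p_of. field. lra. Qed.

Lemma has_deriv_on01_inv_pow4 W W1 H :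
  (forall t, derivable_pt_lim W t (W1 t)) -> (forall t, derivable_pt_lim W1 t (H t)) ->
  (forall t, in01 t -> 0 < W t) ->
  has_deriv_on01 (fun t => / W t ^ 4) (fun t => -4 * W1 t / W t ^ 5) /\
  has_deriv_on01 (fun t => -4 * W1 t / W t ^ 5) (fun t => 20 * W1 t ^ 2 / W t ^ 6 - 4 * H t / W t ^ 5).
Proof.
  intros HW HW1 Hp. split; apply has_deriv_on01_of_derivable; intros x Hx; specialize (Hp x Hx).
  - apply (derivable_pt_lim_eq _ _ ((0 * W x ^ 4 - (INR 4 * W x ^ pred 4 * W1 x) * 1) / (W x ^ 4)²));
      [simpl INR; simpl pred; unfold Rsqr; field; lra|].
    apply (derivable_pt_lim_ext (fun t => 1 / W t ^ 4)); [intros; unfold Rdiv; ring|].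
    apply (derivable_pt_lim_div (fun _ => 1) (fun t => W t ^ 4)); [apply derivable_pt_lim_const| |].
    + apply (derivable_pt_lim_comp W (fun y => y ^ 4)); [auto | apply derivable_pt_lim_pow].
    + apply pow_nonzero; lra.
  - apply (derivable_pt_lim_eq _ _
      (((-4 * H x) * W x ^ 5 - (INR 5 * W x ^ pred 5 * W1 x) * (-4 * W1 x)) / (W x ^ 5)²));
      [simpl INR; simpl pred; unfold Rsqr; field; lra|].
    apply (derivable_pt_lim_div (fun t => -4 * W1 t) (fun t => W t ^ 5)).
    + apply derivable_pt_lim_scal; auto.
    + apply (derivable_pt_lim_comp W (fun y => y ^ 5)); [auto | apply derivable_pt_lim_pow].
    + apply pow_nonzero; lra.
Qed.

(** * The truncated equation w'' = pb / (4 max(w, m)^3) *)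

Lemma Rmax_lipschitz x y m : Rabs (Rmax x m - Rmax y m) <= Rabs (x - y).
Proof.
  unfold Rmax. destruct (Rle_dec x m); destruct (Rle_dec y m);
  unfold Rabs; repeat match goal with |- context [Rcase_abs ?a] => destruct (Rcase_abs a) end; lra.
Qed.

Lemma inv_cube_lipschitz m X Y : 0 < m -> m <= X -> m <= Y ->
  Rabs (/ (4 * X ^ 3) - / (4 * Y ^ 3)) <= 3 / (4 * m ^ 4) * Rabs (X - Y).
Proof.
  intros Hm HX HY.
  set (u := / X). set (v := / Y). set (M := / m).
  assert (Hu : 0 < u <= M) by (unfold u, M; split; [apply Rinv_0_lt_compat | apply Rinv_le_contravar]; lra).
  assert (Hv : 0 < v <= M) by (unfold v, M; split; [apply Rinv_0_lt_compat | apply Rinv_le_contravar]; lra).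
  replace (/ (4 * X ^ 3) - / (4 * Y ^ 3)) with (/ 4 * ((Y - X) * u * v) * (u * u + u * v + v * v))
    by (unfold u, v; field; lra).
  replace (3 / (4 * m ^ 4)) with (3 / 4 * M ^ 4) by (unfold M; field; lra).
  rewrite !Rabs_mult, (Rabs_right (/ 4)), (Rabs_right u), (Rabs_right v),
    (Rabs_right (u * u + u * v + v * v)), Rabs_minus_sym by nra.
  pose proof (Rabs_pos (X - Y)).
  assert (u * v * (u * u + u * v + v * v) <= M * M * (3 * (M * M))) by (apply Rmult_le_compat; nra).
  nra.
Qed.

Lemma inv_pow4_lipschitz m X Y : 0 < m -> m <= X -> m <= Y ->
  Rabs (/ X ^ 4 - / Y ^ 4) <= 4 / m ^ 5 * Rabs (X - Y).
Proof.
  intros Hm HX HY.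
  set (u := / X). set (v := / Y). set (M := / m).
  assert (Hu : 0 < u <= M) by (unfold u, M; split; [apply Rinv_0_lt_compat | apply Rinv_le_contravar]; lra).
  assert (Hv : 0 < v <= M) by (unfold v, M; split; [apply Rinv_0_lt_compat | apply Rinv_le_contravar]; lra).
  replace (/ X ^ 4 - / Y ^ 4) with ((Y - X) * u * v * (u * u * u + u * u * v + u * v * v + v * v * v))
    by (unfold u, v; field; lra).
  replace (4 / m ^ 5) with (4 * M ^ 5) by (unfold M; field; lra).
  rewrite !Rabs_mult, (Rabs_right u), (Rabs_right v),
    (Rabs_right (u * u * u + u * u * v + u * v * v + v * v * v)), Rabs_minus_sym by nra.
  pose proof (Rabs_pos (X - Y)).
  assert (u * u <= M * M) by nra. assert (v * v <= M * M) by nra.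
  assert (u * v * (u * u * u + u * u * v + u * v * v + v * v * v) <= M * M * (4 * (M * M * M)))
    by (apply Rmult_le_compat; nra).
  nra.
Qed.

Lemma truncated_ermakov_exists pb m Pb a b :
  (forall t, continuity_pt pb t) -> (forall t, in01 t -> Rabs (pb t) <= Pb) -> 0 < m ->
  exists W W1 H : R -> R,
    (forall t, derivable_pt_lim W t (W1 t)) /\ (forall t, derivable_pt_lim W1 t (H t)) /\
    W 0 = a /\ W1 0 = b /\ (forall t, in01 t -> H t = pb t / (4 * Rmax (W t) m ^ 3)).
Proof.
  intros Hpbc Hpb Hm.
  assert (HPb : 0 <= Pb) by (pose proof (Hpb 0 ltac:(unfold in01; lra)); pose proof (Rabs_pos (pb 0)); lra).
  assert (Hm4 : 0 <= 3 / (4 * m ^ 4)) by (pose proof (pow_lt m 4 Hm); apply Rmult_le_pos; [lra|];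
    left; apply Rinv_0_lt_compat; lra).
  destruct (picard_existence (fun s x => pb (clamp s) * / (4 * Rmax x m ^ 3)) (Pb * (3 / (4 * m ^ 4))) a b)
    as [W [W1 [H [HW [HW1 [HW0 [HW10 HH]]]]]]].
  - apply Rmult_le_pos; auto.
  - intros s x y. rewrite <- Rmult_minus_distr_l, Rabs_mult, Rmult_assoc.
    apply Rmult_le_compat; [apply Rabs_pos | apply Rabs_pos | apply Hpb, clamp_in01 |].
    eapply Rle_trans; [apply (inv_cube_lipschitz m); auto; apply Rmax_r|].
    apply Rmult_le_compat_l; auto. apply Rmax_lipschitz.
  - intros x s0. apply (continuity_pt_comp (fun s => pb (clamp s)) (fun z => z * / (4 * Rmax x m ^ 3))).
    + apply (continuity_pt_comp clamp pb); [apply continuity_pt_clamp | apply Hpbc].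
    + apply (derivable_pt_lim_continuity_pt _ _ (1 * / (4 * Rmax x m ^ 3))).
      apply (derivable_pt_lim_ext (fun z => / (4 * Rmax x m ^ 3) * z)); [intros; ring|].
      apply (derivable_pt_lim_eq _ _ (/ (4 * Rmax x m ^ 3) * 1)); [ring|].
      apply derivable_pt_lim_scal, derivable_pt_lim_id.
  - exists W, W1, H. repeat split; auto. intros t Ht. rewrite HH, clamp_id; auto.
Qed.

Lemma truncated_rhs_deviation p pb w W m P delta : 0 < m -> m <= w ->
  Rabs p <= P -> Rabs (p - pb) <= delta ->
  Rabs (pb / (4 * Rmax W m ^ 3) - p / (4 * w ^ 3)) <= delta / (4 * m ^ 3) + 3 * P / (4 * m ^ 4) * Rabs (W - w).
Proof.
  intros Hm Hw Hp Hd.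
  assert (HWm : m <= Rmax W m) by apply Rmax_r.
  assert (Hwm : Rmax w m = w) by (apply Rmax_left; lra).
  replace (pb / (4 * Rmax W m ^ 3) - p / (4 * w ^ 3)) with
    (- (p - pb) * / (4 * Rmax W m ^ 3) + p * (/ (4 * Rmax W m ^ 3) - / (4 * Rmax w m ^ 3)))
    by (rewrite Hwm; field; repeat split; try apply pow_nonzero; lra).
  eapply Rle_trans; [apply Rabs_triang|]. rewrite !Rabs_mult, Rabs_Ropp.
  apply Rplus_le_compat.
  - assert (Hinv : Rabs (/ (4 * Rmax W m ^ 3)) <= / (4 * m ^ 3)).
    { pose proof (pow_lt m 3 Hm). pose proof (pow_lt (Rmax W m) 3 ltac:(lra)).
      rewrite Rabs_right by (left; apply Rinv_0_lt_compat; lra).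
      apply Rinv_le_contravar; [lra|]. apply Rmult_le_compat_l; [lra|]. apply pow_incr. lra. }
    unfold Rdiv. apply Rmult_le_compat; auto; apply Rabs_pos.
  - replace (3 * P / (4 * m ^ 4)) with (P * (3 / (4 * m ^ 4))) by (field; lra).
    rewrite Rmult_assoc. apply Rmult_le_compat; try apply Rabs_pos; auto.
    eapply Rle_trans; [apply (inv_cube_lipschitz m); auto; rewrite Hwm; auto|].
    apply Rmult_le_compat_l; [left; apply Rdiv_lt_0_compat; pose proof (pow_lt m 4 Hm); lra|].
    apply Rmax_lipschitz.
Qed.

Lemma second_order_deviation_le W W1 H w w1 w2 A Lp :
  (forall t, derivable_pt_lim W t (W1 t)) -> (forall t, derivable_pt_lim W1 t (H t)) ->
  (forall t, derivable_pt_lim w t (w1 t)) -> (forall t, derivable_pt_lim w1 t (w2 t)) ->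
  W 0 = w 0 -> W1 0 = w1 0 -> 0 <= A -> 0 <= Lp ->
  (forall t, in01 t -> Rabs (H t - w2 t) <= A + Lp * Rabs (W t - w t)) ->
  forall t, in01 t -> (W1 t - w1 t) ^ 2 + (W t - w t) ^ 2 <= A ^ 2 * exp (Lp + 2).
Proof.
  intros HW HW1 Hw Hw1 H0 H10 HA HLp Hdd.
  set (d := fun t => 1 * W t + -1 * w t). set (d1 := fun t => 1 * W1 t + -1 * w1 t).
  set (d2 := fun t => 1 * H t + -1 * w2 t).
  assert (Hd : has_deriv_on01 d d1)
    by (apply has_deriv_on01_lin; apply has_deriv_on01_of_derivable; auto).
  assert (Hd1 : has_deriv_on01 d1 d2)
    by (apply has_deriv_on01_lin; apply has_deriv_on01_of_derivable; auto).
  assert (HE := gronwall_on01 _ _ (Lp + 2) (A ^ 2) ltac:(lra) (pow2_ge_0 A)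
    (has_deriv_on01_lin 1 _ _ 1 _ _ (has_deriv_on01_mult _ _ _ _ Hd1 Hd1) (has_deriv_on01_mult _ _ _ _ Hd Hd))).
  cbv beta in HE. intros t Ht.
  replace ((W1 t - w1 t) ^ 2 + (W t - w t) ^ 2) with (1 * (d1 t * d1 t) + 1 * (d t * d t))
    by (unfold d, d1; ring).
  apply HE; auto; [unfold d, d1; rewrite H0, H10; ring|]. intros x Hx.
  specialize (Hdd x Hx).
  replace (H x - w2 x) with (d2 x) in Hdd by (unfold d2; ring).
  replace (W x - w x) with (d x) in Hdd by (unfold d; ring).
  pose proof (two_mul_abs_le (d1 x) A). pose proof (two_mul_abs_le (d1 x) (d x)).
  rewrite Rabs_mult, (Rabs_right A) in H1 by lra. rewrite Rabs_mult in H2.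
  assert (d2 x * d1 x <= Rabs (d1 x) * (A + Lp * Rabs (d x))).
  { eapply Rle_trans; [apply Rle_abs|]. rewrite Rabs_mult, Rmult_comm.
    apply Rmult_le_compat_l; auto. apply Rabs_pos. }
  pose proof (Rle_abs (d1 x * d x)). rewrite Rabs_mult in H4.
  assert (Lp * (2 * (Rabs (d1 x) * Rabs (d x))) <= Lp * (d1 x * d1 x + d x * d x))
    by (apply Rmult_le_compat_l; auto).
  nra.
Qed.

(* The margin 0.18 m keeps W >= m, so the truncation max(W, m) is inactive. *)
Lemma truncated_ermakov_close w w1 w2 p pb m P delta :
  (forall t, derivable_pt_lim w t (w1 t)) -> (forall t, derivable_pt_lim w1 t (w2 t)) ->
  (forall t, continuity_pt pb t) -> 0 < m -> 0 <= P -> 0 <= delta ->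
  (forall t, in01 t -> 118 / 100 * m <= w t) ->
  (forall t, in01 t -> w2 t = p t / (4 * w t ^ 3)) ->
  (forall t, in01 t -> Rabs (p t) <= P) -> (forall t, in01 t -> Rabs (p t - pb t) <= delta) ->
  (delta / (4 * m ^ 3)) ^ 2 * exp (3 * P / (4 * m ^ 4) + 2) <= (18 / 100 * m) ^ 2 ->
  exists W W1 H : R -> R,
    (forall t, derivable_pt_lim W t (W1 t)) /\ (forall t, derivable_pt_lim W1 t (H t)) /\
    (forall t, in01 t -> H t = pb t / (4 * W t ^ 3)) /\
    (forall t, in01 t -> Rabs (W t - w t) <= 18 / 100 * m /\ Rabs (W1 t - w1 t) <= 18 / 100 * m) /\
    (forall t, in01 t -> (W t - w t) ^ 2 <= (delta / (4 * m ^ 3)) ^ 2 * exp (3 * P / (4 * m ^ 4) + 2)).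
Proof.
  intros Hw Hw1 Hpbc Hm HP Hdelta Hwm Hw2 Hp Hpb Hsmall.
  assert (Hpb_bound : forall t, in01 t -> Rabs (pb t) <= P + delta).
  { intros t Ht. replace (pb t) with (p t - (p t - pb t)) by ring.
    eapply Rle_trans; [apply Rabs_triang|]. rewrite Rabs_Ropp.
    pose proof (Hp t Ht). pose proof (Hpb t Ht). lra. }
  destruct (truncated_ermakov_exists pb m (P + delta) (w 0) (w1 0) Hpbc Hpb_bound Hm)
    as [W [W1 [H [HW [HW1 [HW0 [HW10 HH]]]]]]].
  assert (Hdev := second_order_deviation_le W W1 H w w1 w2 (delta / (4 * m ^ 3)) (3 * P / (4 * m ^ 4))
    HW HW1 Hw Hw1 HW0 HW10).
  assert (Hdev' : forall t, in01 t ->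
    (W1 t - w1 t) ^ 2 + (W t - w t) ^ 2 <= (delta / (4 * m ^ 3)) ^ 2 * exp (3 * P / (4 * m ^ 4) + 2)).
  { pose proof (pow_lt m 3 Hm). pose proof (pow_lt m 4 Hm).
    apply Hdev; [apply Rdiv_le_0_compat; lra | apply Rdiv_le_0_compat; lra |].
    intros t Ht. rewrite HH, Hw2 by auto. apply truncated_rhs_deviation; auto.
    specialize (Hwm t Ht). lra. }
  assert (Hclose : forall t, in01 t -> Rabs (W t - w t) <= 18 / 100 * m /\ Rabs (W1 t - w1 t) <= 18 / 100 * m).
  { intros t Ht. specialize (Hdev' t Ht). pose proof (pow2_ge_0 (W t - w t)). pose proof (pow2_ge_0 (W1 t - w1 t)).
    split; (rewrite <- (Rabs_right (18 / 100 * m)) by lra; apply Rsqr_le_abs_0; unfold Rsqr; simpl in *; lra). }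
  exists W, W1, H. split; [auto|]. split; [auto|]. split; [|split; [auto|]].
  - intros t Ht. rewrite HH by auto. rewrite Rmax_left; auto.
    destruct (Hclose t Ht) as [Hc _]. apply Rabs_le_between in Hc. specialize (Hwm t Ht). lra.
  - intros t Ht. specialize (Hdev' t Ht). pose proof (pow2_ge_0 (W1 t - w1 t)). lra.
Qed.

Lemma pow4_le_reg x y : 0 < y -> x ^ 4 <= y ^ 4 -> x <= y.
Proof.
  intros Hy H. destruct (Rle_or_lt x y) as [|Hl]; auto.
  assert (y ^ 2 < x ^ 2) by nra.
  assert (y ^ 2 * y ^ 2 < x ^ 2 * x ^ 2) by (pose proof (pow_lt y 2 Hy); nra).
  replace (x ^ 4) with (x ^ 2 * x ^ 2) in H by ring. replace (y ^ 4) with (y ^ 2 * y ^ 2) in H by ring.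
  lra.
Qed.

Lemma inv_pow4_half_le w W m : 0 < m -> 118 / 100 * m <= w -> Rabs (W - w) <= 18 / 100 * m ->
  / w ^ 4 / 2 <= / W ^ 4.
Proof.
  intros Hm Hw HWw. apply Rabs_le_between in HWw.
  assert (HW : 0 < W) by lra.
  assert (W ^ 4 <= (116 / 100 * w) ^ 4) by (apply pow_incr; lra).
  pose proof (pow_lt W 4 HW). pose proof (pow_lt w 4 ltac:(lra)).
  replace (/ w ^ 4 / 2) with (/ (2 * w ^ 4)) by (field; lra).
  apply Rinv_le_contravar; [lra|]. replace ((116 / 100 * w) ^ 4) with ((116 / 100) ^ 4 * w ^ 4) in H by ring.
  lra.
Qed.

Lemma inv_pow4_deriv_le w w1 W W1 m eta : 0 < m -> 0 <= eta -> 118 / 100 * m <= w ->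
  Rabs (W - w) <= 18 / 100 * m -> Rabs (W1 - w1) <= 18 / 100 * m -> Rabs w1 <= / 4 * w * eta ->
  Rabs (-4 * W1 / W ^ 5) <= (6 / 5 * eta + 1) * / W ^ 4.
Proof.
  intros Hm Heta Hw HWw HW1 Hw1. apply Rabs_le_between in HWw.
  assert (HW : m <= W) by lra.
  assert (HW1b : Rabs W1 <= / 4 * w * eta + 18 / 100 * m).
  { replace W1 with (w1 + (W1 - w1)) by ring. eapply Rle_trans; [apply Rabs_triang|]. lra. }
  pose proof (pow_lt W 4 ltac:(lra)).
  replace (-4 * W1 / W ^ 5) with (- (4 * W1) * / W ^ 5) by (field; lra).
  rewrite Rabs_mult, Rabs_Ropp, Rabs_mult, (Rabs_right 4), (Rabs_right (/ W ^ 5))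
    by (try left; try apply Rinv_0_lt_compat, pow_lt; lra).
  replace ((6 / 5 * eta + 1) * / W ^ 4) with ((6 / 5 * eta + 1) * W * / W ^ 5) by (field; lra).
  apply Rmult_le_compat_r; [left; apply Rinv_0_lt_compat, pow_lt; lra|].
  assert (eta * w <= 6 / 5 * eta * (w - 18 / 100 * m)) by nra.
  nra.
Qed.

Lemma inv_qrt_pow4 x : 0 < x -> / qrt x ^ 4 = x.
Proof. intros Hx. rewrite qrt_pow4, Rinv_inv; auto. Qed.

Lemma qrt_lower x eta : 0 < x <= eta -> 118 / 100 * qrt (2 * eta) <= qrt x.
Proof.
  intros Hx. apply pow4_le_reg; [apply qrt_pos|].
  rewrite Rpow_mult_distr, !qrt_pow4 by lra.
  apply Rmult_le_reg_r with (2 * eta * x); [nra|].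
  replace ((118 / 100) ^ 4 * / (2 * eta) * (2 * eta * x)) with ((118 / 100) ^ 4 * x) by (field; lra).
  replace (/ x * (2 * eta * x)) with (2 * eta) by (field; lra).
  lra.
Qed.

Lemma sqr_le_of_abs_le x y c : 0 <= c -> Rabs x <= c * Rabs y -> x ^ 2 <= c ^ 2 * y ^ 2.
Proof.
  intros Hc H. rewrite <- pow2_abs, <- (pow2_abs y), <- Rpow_mult_distr.
  apply pow_incr. split; [apply Rabs_pos | auto].
Qed.

(* With m = (2 eta)^(-1/4), the Gronwall bound of [truncated_ermakov_close] is at most
   (0.18 m)^2 and, transported through x |-> x^(-4), gives the closeness of qb to q. *)
Lemma ermakov_budget eta delta : 0 < eta ->
  8 * eta ^ 2 * delta ^ 2 * exp (3 / 2 * eta ^ 2 + 2) <= 1 ->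
  let m := qrt (2 * eta) in
  let A2 := (delta / (4 * m ^ 3)) ^ 2 * exp (3 * eta / (4 * m ^ 4) + 2) in
  A2 <= (18 / 100 * m) ^ 2 /\ (4 / m ^ 5) ^ 2 * A2 = 16 * eta ^ 4 * delta ^ 2 * exp (3 / 2 * eta ^ 2 + 2).
Proof.
  intros Heta Hsmall m A2.
  assert (Hm : 0 < m) by apply qrt_pos.
  assert (Hm4 : m ^ 4 = / (2 * eta)) by (apply qrt_pow4; lra).
  assert (Hm8 : m ^ 8 = / (4 * eta ^ 2))
    by (replace (m ^ 8) with (m ^ 4 * m ^ 4) by ring; rewrite Hm4; field; lra).
  set (E := exp (3 / 2 * eta ^ 2 + 2)) in *.
  assert (HA2 : A2 = delta ^ 2 * E / (16 * m ^ 6)).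
  { unfold A2, E. replace (3 * eta / (4 * m ^ 4)) with (3 / 2 * eta ^ 2) by (rewrite Hm4; field; lra).
    field. lra. }
  rewrite HA2. pose proof (pow_lt m 6 Hm). split.
  - apply Rmult_le_reg_r with (16 * m ^ 6); [lra|].
    replace (delta ^ 2 * E / (16 * m ^ 6) * (16 * m ^ 6)) with (delta ^ 2 * E) by (field; lra).
    replace ((18 / 100 * m) ^ 2 * (16 * m ^ 6)) with (5184 / 10000 * m ^ 8) by field. rewrite Hm8.
    apply Rmult_le_reg_l with (8 * eta ^ 2); [nra|].
    replace (8 * eta ^ 2 * (5184 / 10000 * / (4 * eta ^ 2))) with (10368 / 10000) by (field; lra).
    replace (8 * eta ^ 2 * (delta ^ 2 * E)) with (8 * eta ^ 2 * delta ^ 2 * E) by ring. lra.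
  - replace (16 * eta ^ 4) with (/ (m ^ 8 * m ^ 8)) by (rewrite Hm8; field; lra).
    field. lra.
Qed.

Lemma ermakov_perturbation q q1 q2 pb eta2 delta :
  (forall t, 0 < q t) -> (forall t, derivable_pt_lim q t (q1 t)) -> (forall t, derivable_pt_lim q1 t (q2 t)) ->
  (forall t, continuity_pt pb t) -> 0 < eta2 -> 0 <= delta ->
  (forall t, in01 t -> q t <= eta2 /\ Rabs (q1 t / q t) <= eta2 /\ Rabs (p_of q q1 q2 t) <= eta2) ->
  (forall t, in01 t -> Rabs (p_of q q1 q2 t - pb t) <= delta) ->
  8 * eta2 ^ 2 * delta ^ 2 * exp (3 / 2 * eta2 ^ 2 + 2) <= 1 ->
  exists qb qb1 qb2 : R -> R,
    has_deriv_on01 qb qb1 /\ has_deriv_on01 qb1 qb2 /\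
    (forall t, in01 t -> p_of qb qb1 qb2 t = pb t) /\
    (forall t, in01 t -> q t / 2 <= qb t) /\
    (forall t, in01 t -> Rabs (qb1 t) <= (6 / 5 * eta2 + 1) * qb t) /\
    (forall t, in01 t -> (q t - qb t) ^ 2 <= 16 * eta2 ^ 4 * delta ^ 2 * exp (3 / 2 * eta2 ^ 2 + 2)).
Proof.
  intros Hq Hq1 Hq2 Hpbc Heta Hdelta Hbnd Hpb Hsmall.
  destruct (ermakov_budget eta2 delta Heta Hsmall) as [Hmargin Hclose_value].
  set (m := qrt (2 * eta2)) in *. assert (Hm : 0 < m) by apply qrt_pos.
  set (w := w_of q). set (w1 := w1_of q q1).
  assert (Hwm : forall t, in01 t -> 118 / 100 * m <= w t)
    by (intros t Ht; apply qrt_lower; split; [apply Hq | apply Hbnd; auto]).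
  assert (Hw2 : forall t, in01 t -> w2_of q q1 q2 t = p_of q q1 q2 t / (4 * w t ^ 3)).
  { intros t Ht. rewrite (p_of_w_of q q1 q2); auto. fold w. field.
    pose proof (qrt_pos (q t)). unfold w, w_of. lra. }
  destruct (truncated_ermakov_close w w1 (w2_of q q1 q2) (p_of q q1 q2) pb m eta2 delta
    (derivable_pt_lim_w_of q q1 Hq Hq1) (derivable_pt_lim_w1_of q q1 q2 Hq Hq1 Hq2) Hpbc Hm
    ltac:(lra) Hdelta Hwm Hw2 ltac:(intros t Ht; apply Hbnd; auto) Hpb Hmargin)
    as [W [W1 [H [HW [HW1 [HH [Hclose HWw]]]]]]].
  assert (HWm : forall t, in01 t -> m <= W t).
  { intros t Ht. destruct (Hclose t Ht) as [Hc _]. apply Rabs_le_between in Hc. specialize (Hwm t Ht). lra. }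
  destruct (has_deriv_on01_inv_pow4 W W1 H HW HW1 ltac:(intros t Ht; specialize (HWm t Ht); lra))
    as [Hqb Hqb1].
  eexists _, _, _. split; [exact Hqb|]. split; [exact Hqb1|]. split; [|split; [|split]].
  - intros t Ht. specialize (HWm t Ht). rewrite p_of_inv_pow4, HH by (auto; lra). field. lra.
  - intros t Ht. rewrite <- (inv_qrt_pow4 (q t)) by auto. destruct (Hclose t Ht) as [Hc _].
    apply (inv_pow4_half_le _ _ m); [auto | exact (Hwm t Ht) | auto].
  - intros t Ht. destruct (Hclose t Ht) as [Hc Hc1].
    apply (inv_pow4_deriv_le (w t) (w1 t) _ _ m); auto; [lra|].
    unfold w1, w1_of. fold w. destruct (Hbnd t Ht) as [_ [Hr _]].
    pose proof (qrt_pos (q t)).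
    rewrite !Rabs_mult, Rabs_Ropp, (Rabs_right (/ 4)), (Rabs_right (w t)) by (unfold w, w_of; lra).
    apply Rmult_le_compat_l; auto. unfold w, w_of. apply Rmult_le_pos; lra.
  - intros t Ht. rewrite <- (inv_qrt_pow4 (q t)) by auto. fold (w_of q t) w. rewrite <- Hclose_value.
    apply Rle_trans with ((4 / m ^ 5) ^ 2 * (W t - w t) ^ 2).
    + apply sqr_le_of_abs_le; [left; apply Rdiv_lt_0_compat; [|apply pow_lt]; lra|].
      rewrite (Rabs_minus_sym (W t)). apply inv_pow4_lipschitz; auto. specialize (Hwm t Ht). lra.
    + apply Rmult_le_compat_l; [apply pow2_ge_0 | apply HWw; auto].
Qed.

Lemma pow_le_exp n x : 0 <= x -> x ^ n <= exp (INR n * x).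
Proof.
  intros Hx. induction n as [|n IH].
  - simpl. rewrite Rmult_0_l, exp_0. lra.
  - rewrite S_INR. replace ((INR n + 1) * x) with (x + INR n * x) by ring. rewrite exp_plus. simpl.
    pose proof (exp_ineq1_le x). pose proof (pow_le x n Hx).
    apply Rmult_le_compat; lra.
Qed.

Lemma exp_le_inv_1_minus y : y <= 0 -> exp y <= / (1 - y).
Proof.
  intros H. pose proof (exp_ineq1_le (- y)). pose proof (exp_pos y).
  assert (exp y * exp (- y) = 1) by (rewrite <- exp_plus; replace (y + - y) with 0 by ring; apply exp_0).
  apply Rmult_le_reg_r with (1 - y); [lra|]. rewrite Rinv_l by lra. nra.
Qed.

Lemma pow_mul_exp_le n x z c : 0 <= x -> 0 < c -> INR n * x + z <= Rmin 0 (1 - / c) ->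
  x ^ n * exp z <= c.
Proof.
  intros Hx Hc H. pose proof (Rmin_l 0 (1 - / c)). pose proof (Rmin_r 0 (1 - / c)).
  eapply Rle_trans; [apply Rmult_le_compat_r; [left; apply exp_pos | apply pow_le_exp; auto]|].
  rewrite <- exp_plus. eapply Rle_trans; [apply exp_le_inv_1_minus; lra|].
  replace c with (/ / c) by (field; lra).
  apply Rinv_le_contravar; [apply Rinv_0_lt_compat; auto | lra].
Qed.

Lemma ermakov_delta_small eta2 k delta : 0 < eta2 -> 8 * eta2 ^ 2 + 31 <= k ->
  0 <= delta <= 1 / 2 * eta2 * exp (- k) ->
  8 * eta2 ^ 2 * delta ^ 2 * exp (3 / 2 * eta2 ^ 2 + 2) <= 1.
Proof.
  intros Heta Hk Hdelta.
  assert (Hd2 : delta ^ 2 <= 1 / 4 * eta2 ^ 2 * (exp (- k) * exp (- k))).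
  { pose proof (exp_pos (- k)). nra. }
  assert (Hexp : exp (- k) * exp (- k) * exp (3 / 2 * eta2 ^ 2 + 2) = exp (3 / 2 * eta2 ^ 2 + 2 - 2 * k))
    by (rewrite <- !exp_plus; f_equal; ring).
  assert (Hpe : eta2 ^ 4 * exp (3 / 2 * eta2 ^ 2 + 2 - 2 * k) <= 1 / 2).
  { apply pow_mul_exp_le; [lra | lra |]. replace (INR 4) with 4 by (simpl; ring).
    apply Rmin_glb; [nra|]. replace (/ (1 / 2)) with 2 by field. nra. }
  pose proof (exp_pos (3 / 2 * eta2 ^ 2 + 2)). pose proof (pow2_ge_0 eta2).
  apply Rle_trans with (8 * eta2 ^ 2 * (1 / 4 * eta2 ^ 2 * (exp (- k) * exp (- k))) * exp (3 / 2 * eta2 ^ 2 + 2)).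
  - apply Rmult_le_compat_r; [lra|]. apply Rmult_le_compat_l; [lra | auto].
  - replace (8 * eta2 ^ 2 * (1 / 4 * eta2 ^ 2 * (exp (- k) * exp (- k))) * exp (3 / 2 * eta2 ^ 2 + 2))
      with (2 * (eta2 ^ 4 * (exp (- k) * exp (- k) * exp (3 / 2 * eta2 ^ 2 + 2)))) by field.
    rewrite Hexp. lra.
Qed.

Lemma approx_delta_small eta1 eta2 k lam eps delta : 0 < eta1 < eta2 -> 8 * eta2 ^ 2 + 31 <= k ->
  0 < lam -> 0 <= delta -> lam * delta <= 1 / 2 * eta1 * exp (- k) * eps -> 0 <= eps ->
  lam ^ 2 * (16 * eta2 ^ 4 * delta ^ 2 * exp (3 / 2 * eta2 ^ 2 + 2)) * exp (1 + (6 / 5 * eta2 + 1))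
    <= eps ^ 2 * (eta1 / 2).
Proof.
  intros Heta Hk Hlam Hdelta Hld Heps.
  set (Z := 3 / 2 * eta2 ^ 2 + 2 + (1 + (6 / 5 * eta2 + 1)) - 2 * k).
  assert (Hld2 : (lam * delta) ^ 2 <= 1 / 4 * eta1 ^ 2 * (exp (- k) * exp (- k)) * eps ^ 2).
  { pose proof (exp_pos (- k)). assert (0 <= lam * delta) by nra. nra. }
  assert (Hexp : exp (- k) * exp (- k) * (exp (3 / 2 * eta2 ^ 2 + 2) * exp (1 + (6 / 5 * eta2 + 1))) = exp Z)
    by (unfold Z; rewrite <- !exp_plus; f_equal; ring).
  assert (Hpe : eta2 ^ 5 * exp Z <= 1 / 8).
  { apply pow_mul_exp_le; [lra | lra |]. replace (INR 5) with 5 by (simpl; ring). unfold Z.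
    apply Rmin_glb; [nra|]. replace (/ (1 / 8)) with 8 by field. nra. }
  assert (Hpe1 : eta1 * eta2 ^ 4 * exp Z <= 1 / 8).
  { eapply Rle_trans; [|exact Hpe]. apply Rmult_le_compat_r; [left; apply exp_pos|].
    replace (eta2 ^ 5) with (eta2 * eta2 ^ 4) by ring.
    apply Rmult_le_compat_r; [apply pow_le|]; lra. }
  replace (lam ^ 2 * (16 * eta2 ^ 4 * delta ^ 2 * exp (3 / 2 * eta2 ^ 2 + 2)) * exp (1 + (6 / 5 * eta2 + 1)))
    with (16 * eta2 ^ 4 * (lam * delta) ^ 2 * (exp (3 / 2 * eta2 ^ 2 + 2) * exp (1 + (6 / 5 * eta2 + 1))))
    by ring.
  pose proof (exp_pos (3 / 2 * eta2 ^ 2 + 2)). pose proof (exp_pos (1 + (6 / 5 * eta2 + 1))).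
  pose proof (pow_le eta2 4 ltac:(lra)).
  eapply Rle_trans.
  { apply Rmult_le_compat_r; [apply Rmult_le_pos; lra|].
    apply Rmult_le_compat_l; [lra | exact Hld2]. }
  replace (16 * eta2 ^ 4 * (1 / 4 * eta1 ^ 2 * (exp (- k) * exp (- k)) * eps ^ 2) *
           (exp (3 / 2 * eta2 ^ 2 + 2) * exp (1 + (6 / 5 * eta2 + 1))))
    with (4 * eta1 * eps ^ 2 * (eta1 * eta2 ^ 4 * (exp (- k) * exp (- k) *
           (exp (3 / 2 * eta2 ^ 2 + 2) * exp (1 + (6 / 5 * eta2 + 1)))))) by field.
  rewrite Hexp. pose proof (pow2_ge_0 eps).
  apply Rle_trans with (4 * eta1 * eps ^ 2 * (1 / 8)); [apply Rmult_le_compat_l; nra | lra].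
Qed.

Lemma perturbation_size eta1 eta2 lam eps : 0 < eta1 -> eta1 < eta2 -> 0 < lam -> 0 < eps ->
  eps < lam * exp (Rpower eta2 (3 / 4) / 4) ->
  let k := 20 * (eta2 / eta1) ^ 2 + 8 * eta2 ^ 2 + 10 * (eta2 / eta1) + 1 in
  let delta := 1 / 2 * (eta1 / lam) * exp (- k) * exp (- (Rpower eta2 (3 / 4) / 4)) * eps in
  0 < delta /\ 8 * eta2 ^ 2 * delta ^ 2 * exp (3 / 2 * eta2 ^ 2 + 2) <= 1 /\
  lam ^ 2 * (16 * eta2 ^ 4 * delta ^ 2 * exp (3 / 2 * eta2 ^ 2 + 2)) * exp (1 + (6 / 5 * eta2 + 1))
    <= eps ^ 2 * (eta1 / 2).
Proof.
  intros He1 He12 Hlam Heps Hepsl k delta.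
  set (s := Rpower eta2 (3 / 4) / 4) in *.
  assert (Hs : 0 <= s) by (unfold s, Rpower; pose proof (exp_pos (3 / 4 * ln eta2)); lra).
  assert (Hk : 8 * eta2 ^ 2 + 31 <= k).
  { assert (1 < eta2 / eta1).
    { apply Rmult_lt_reg_r with eta1; [lra|]. unfold Rdiv. rewrite Rmult_assoc, Rinv_l; lra. }
    unfold k. nra. }
  assert (Hes : exp (- s) * eps < lam).
  { assert (exp (- s) * exp s = 1) by (rewrite <- exp_plus; replace (- s + s) with 0 by ring; apply exp_0).
    pose proof (exp_pos (- s)). nra. }
  assert (Hes1 : exp (- s) <= 1) by (rewrite <- exp_0; apply exp_le; lra).
  assert (Hlamdelta : lam * delta = 1 / 2 * eta1 * exp (- k) * (exp (- s) * eps)) by (unfold delta; field; lra).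
  pose proof (exp_pos (- k)). pose proof (exp_pos (- s)).
  assert (Hdelta : 0 < delta).
  { apply Rmult_lt_reg_l with lam; [lra|]. rewrite Hlamdelta. rewrite Rmult_0_r.
    repeat apply Rmult_lt_0_compat; lra. }
  split; [exact Hdelta|]. split.
  - apply (ermakov_delta_small eta2 k); [lra | auto | split; [lra|]].
    apply Rmult_le_reg_l with lam; [lra|]. rewrite Hlamdelta.
    assert (0 < 1 / 2 * eta1 * exp (- k)) by (repeat apply Rmult_lt_0_compat; lra).
    assert (1 / 2 * eta1 * exp (- k) * (exp (- s) * eps) <= 1 / 2 * eta1 * exp (- k) * lam) by
      (apply Rmult_le_compat_l; lra).
    assert (1 / 2 * eta1 * exp (- k) <= 1 / 2 * eta2 * exp (- k)) by (apply Rmult_le_compat_r; lra).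
    assert (1 / 2 * eta1 * exp (- k) * lam <= 1 / 2 * eta2 * exp (- k) * lam) by (apply Rmult_le_compat_r; lra).
    lra.
  - apply (approx_delta_small eta1 eta2 k lam eps delta); try lra. rewrite Hlamdelta.
    apply Rmult_le_compat_l; [repeat apply Rmult_le_pos; lra|]. nra.
Qed.

Theorem theorem4p2
  (q : R -> R) (Dq : nat -> R -> R) (eta1 eta2 lam eps : R) (pb : R -> R) :
  is_derivs q Dq ->
  (forall t, 0 < q t) ->
  0 < eta1 -> eta1 < eta2 ->
  (forall t, in01 t ->
     eta1 <= q t <= eta2 /\
     Rabs (Dq 1%nat t / q t) <= eta2 /\
     Rabs (p_of q (Dq 1%nat) (Dq 2%nat) t) <= eta2) ->
  0 < lam ->
  0 < eps -> eps < lam * exp (Rpower eta2 (3 / 4) / 4) ->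
  smooth pb ->
  (let k := 20 * (eta2 / eta1) ^ 2 + 8 * eta2 ^ 2 + 10 * (eta2 / eta1) + 1 in
   forall t, in01 t ->
     Rabs (p_of q (Dq 1%nat) (Dq 2%nat) t - pb t)
       <= 1 / 2 * (eta1 / lam) * exp (- k) * exp (- (Rpower eta2 (3 / 4) / 4)) * eps) ->
  exists qb qb1 qb2 : R -> R,
    has_deriv_on01 qb qb1 /\ has_deriv_on01 qb1 qb2 /\
    (forall t, in01 t -> qb t <> 0) /\
    (forall t, in01 t -> p_of qb qb1 qb2 t = pb t) /\
    (forall alpha alpha' : R -> R,
       is_phase_function lam qb alpha alpha' ->
       is_approx_phase_function eps lam q alpha alpha').
Proof.
  intros [HD0 HDs] Hq He1 He12 Hbnd Hlam Heps Hepsl [Dp [Hp0 Hps]] Hclose.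
  destruct (perturbation_size eta1 eta2 lam eps He1 He12 Hlam Heps Hepsl) as [Hdelta [Hsmall Hsmall']].
  cbv zeta in Hclose, Hsmall, Hsmall', Hdelta.
  assert (Hq1 : forall t, derivable_pt_lim q t (Dq 1%nat t)) by (intros t; rewrite <- HD0; apply HDs).
  assert (Hq2 : forall t, derivable_pt_lim (Dq 1%nat) t (Dq 2%nat t)) by (intros; apply HDs).
  assert (Hpbc : forall t, continuity_pt pb t)
    by (intros t; rewrite <- Hp0; apply (derivable_pt_lim_continuity_pt _ _ _ (Hps O t))).
  assert (Hbnd' : forall t, in01 t -> q t <= eta2 /\ Rabs (Dq 1%nat t / q t) <= eta2 /\
    Rabs (p_of q (Dq 1%nat) (Dq 2%nat) t) <= eta2)
    by (intros t Ht; destruct (Hbnd t Ht) as [[_ H1] H2]; auto).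
  destruct (ermakov_perturbation q (Dq 1%nat) (Dq 2%nat) pb eta2 _ Hq Hq1 Hq2 Hpbc ltac:(lra) (Rlt_le _ _ Hdelta)
    Hbnd' Hclose Hsmall)
    as [qb [qb1 [qb2 [Hqb [Hqb1 [Hpof [Hlow [Hqb1_le Hqb_close]]]]]]]].
  assert (Hlow' : forall t, in01 t -> eta1 / 2 <= qb t)
    by (intros t Ht; specialize (Hlow t Ht); destruct (Hbnd t Ht) as [Hqe _]; lra).
  assert (Hqc : forall t, continuity_pt q t)
    by (intros t; apply (derivable_pt_lim_continuity_pt _ _ _ (Hq1 t))).
  assert (HqM : forall t, in01 t -> Rabs (q t) <= eta2)
    by (intros t Ht; destruct (Hbnd t Ht) as [Hqe _]; rewrite Rabs_right; lra).
  exists qb, qb1, qb2. split; [auto|]. split; [auto|]. split; [|split; [auto|]].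
  - intros t Ht. specialize (Hlow t Ht). specialize (Hq t). lra.
  - intros alpha alpha'.
    exact (phase_function_approx lam q qb qb1 (eta1 / 2) (6 / 5 * eta2 + 1) _ Hqb Hlow' ltac:(lra)
      Hqb1_le ltac:(lra) Hqb_close alpha alpha' eps eta2 Hqc HqM Hlam ltac:(lra) Hsmall').
Qed.
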